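(* For every $\alpha\in(0,\infty)$, $$\dim_H F(1/2,\alpha)=\frac12 .$$
   Context: Every $x\in(0,1)\setminus\mathbb{Q}$ has a unique infinite continued fraction expansion $x=[a_1(x),a_2(x),\dots]$ with partial quotients $a_i(x)\in\mathbb{N}=\{1,2,\dots\}$. For $n\in\mathbb{N}$ let $T_n(x):=\max\{a_k(x):1\le k\le n\}$ (the largest partial quotient among the first $n$). For $\gamma\in(0,\infty)$ and $\alpha\in(0,\infty)$ define $$F(\gamma,\alpha):=\Big\{x\in(0,1)\setminus\mathbb{Q}:\ \lim_{n\to\infty}\frac{T_n(x)}{e^{n^{\gamma}}}=\alpha\Big\}.$$ $\dim_H$ denotes Hausdorff dimension. *)

From Stdlib Require Import Reals ZArith.
Open Scope R_scope.

Definition irrational (x : R) : Prop :=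
  forall p q : Z, q <> 0%Z -> x <> IZR p / IZR q.

Definition gauss (x : R) : R := / x - IZR (Int_part (/ x)).

(** k-th partial quotient, k >= 1:  a_k(x) = floor(1 / G^(k-1)(x)). *)
Definition cf_digit (k : nat) (x : R) : R :=
  IZR (Int_part (/ (Nat.iter (k - 1) gauss x))).

(** T_n(x) = max { a_k(x) : 1 <= k <= n }  (T_0 := 0, never used). *)
Fixpoint Tmax (n : nat) (x : R) : R :=
  match n with
  | O => 0
  | S m => Rmax (Tmax m x) (cf_digit (S m) x)
  end.

Definition F_set (gamma alpha : R) (x : R) : Prop :=
  0 < x < 1 /\ irrational x /\
  Un_cv (fun n => Tmax (S n) x / exp (Rpower (INR (S n)) gamma)) alpha.

(** H^s(E) = 0: for every delta > 0, H^s_delta(E) = 0, i.e. for every eps > 0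
    there is a countable cover (U_i) of E by sets of diameter at most
    d_i <= delta with sum_i d_i^s <= eps.  (The d_i are upper bounds for the
    diameters, taken > 0; for s > 0 this gives the same infimum.) *)
Definition Hs_null (s : R) (E : R -> Prop) : Prop :=
  forall delta eps : R, 0 < delta -> 0 < eps ->
  exists (U : nat -> R -> Prop) (d : nat -> R),
    (forall x, E x -> exists i, U i x) /\
    (forall i, 0 < d i <= delta) /\
    (forall i x y, U i x -> U i y -> Rabs (x - y) <= d i) /\
    (forall N, sum_f_R0 (fun i => Rpower (d i) s) N <= eps).

Definition is_glb (A : R -> Prop) (m : R) : Prop :=
  (forall s, A s -> m <= s) /\ (forall b, (forall s, A s -> b <= s) -> b <= m).

Definition dimH_is (E : R -> Prop) (d : R) : Prop :=
  is_glb (fun s => 0 < s /\ Hs_null s E) d.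

From Stdlib Require Import Reals Lra Lia Psatz ZArith List Classical ClassicalEpsilon.
Open Scope R_scope.

(** If [T_n(x) ~ alpha e^(sqrt n)], the running maximum must set a new
    record of size about [e^(sqrt n)] every [O(theta sqrt n)] steps, so the product of
    the first [N] partial quotients is at least [e^(N / (4 theta))].  Cover the points by
    the level-[N] cylinders with digits below [alpha e^(sqrt N)] and such a large digit
    product; since a cylinder has length at most [q_N^(-2)], the [s]-sum is at most
    [e^(-2 (s - s') N / (4 theta)) zeta(2 s')^N], which tends to 0 when [s > 1/2] and
    [theta] is small.

    For [s < 1/2] let the [n]-th digit range freely over a window
    [[A_n - m_n + 1, A_n]] with [A_n ~ alpha e^(sqrt n)] and [m_n ~ e^((s + 1/2) sqrt n)];
    all such points lie in the set.  Reading the choices as a mixed-radix expansion of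
    [t] in [[0, 1/2]] gives a map whose inverse is [s]-Hölder, because [m_0 ... m_(n-1)]
    outgrows [((A_0 + 1) ... (A_n + 1))^(2 s)].  An [H^s]-null cover of the set would then
    cover an interval by sets of arbitrarily small total length. *)

Lemma Int_part_IZR_plus (z : Z) (u : R) : 0 <= u < 1 -> Int_part (IZR z + u) = z.
Proof. intros. symmetry. apply Int_part_spec. lra. Qed.

Lemma Int_part_ge (z : Z) (r : R) : IZR z <= r -> (z <= Int_part r)%Z.
Proof.
  intros H. destruct (base_Int_part r) as [B1 B2].
  assert (z - 1 < Int_part r)%Z. { apply lt_IZR. rewrite minus_IZR. simpl. lra. } lia.
Qed.

Lemma nat_above (r : R) : exists n : nat, r <= INR n.
Proof.
  destruct (archimed r) as [H _].
  destruct (Z_lt_le_dec (up r) 0).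
  - exists 0%nat. simpl. apply IZR_lt in l. lra.
  - exists (Z.to_nat (up r)). rewrite INR_IZR_INZ, Z2Nat.id by auto. lra.
Qed.

Lemma nat_floor (r : R) : 0 <= r -> exists d : nat, r - 1 < INR d <= r.
Proof.
  intros Hr. destruct (base_Int_part r) as [B1 B2].
  assert (H0 : (0 <= Int_part r)%Z). { assert (-1 < Int_part r)%Z by (apply lt_IZR; simpl; lra). lia. }
  exists (Z.to_nat (Int_part r)). rewrite INR_IZR_INZ, Z2Nat.id by auto. lra.
Qed.

Lemma exp_le (x y : R) : x <= y -> exp x <= exp y.
Proof. intros [H|H]; [left; apply exp_increasing; auto|subst; lra]. Qed.

Lemma exp_INR_mult (a : R) (n : nat) : exp (a * INR n) = exp a ^ n.
Proof.
  induction n. simpl. rewrite Rmult_0_r. apply exp_0.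
  rewrite S_INR, Rmult_plus_distr_l, Rmult_1_r, exp_plus, IHn. simpl. ring.
Qed.

Lemma Rpower_pos (x y : R) : 0 < Rpower x y.
Proof. unfold Rpower. apply exp_pos. Qed.

Lemma Rpower_1_base (y : R) : Rpower 1 y = 1.
Proof. unfold Rpower. rewrite ln_1, Rmult_0_r, exp_0. auto. Qed.

Lemma Rpower_half_sqrt (n : nat) : Rpower (INR (S n)) (1/2) = sqrt (INR (S n)).
Proof. replace (1/2) with (/2) by field. apply Rpower_sqrt. apply lt_0_INR. lia. Qed.

Lemma sqrt_INR_ge (r : R) (n : nat) : 0 <= r -> r * r <= INR n -> r <= sqrt (INR n).
Proof. intros. rewrite <- (sqrt_square r) by lra. apply sqrt_le_1_alt. auto. Qed.

Lemma sqrt_INR_le (i n : nat) : (i <= n)%nat -> sqrt (INR i) <= sqrt (INR n).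
Proof. intros. apply sqrt_le_1_alt. apply le_INR. auto. Qed.

Lemma sqrt_INR_S_le (n : nat) : sqrt (INR (S n)) <= sqrt (INR n) + 1.
Proof.
  pose proof (sqrt_pos (INR n)). rewrite <- (sqrt_square (sqrt (INR n) + 1)) by lra.
  apply sqrt_le_1_alt. rewrite S_INR. pose proof (sqrt_sqrt (INR n) (pos_INR n)). nra.
Qed.

Lemma le_0_of_le_geom (q z : R) : 0 < q < 1 -> (forall n, z <= q ^ n) -> z <= 0.
Proof.
  intros Hq H. destruct (Rle_or_lt z 0); auto. exfalso.
  assert (Hq' : Rabs q < 1) by (rewrite Rabs_right; lra).
  destruct (pow_lt_1_zero _ Hq' z H0) as [N HN]. specialize (HN N (le_n _)).
  rewrite Rabs_right in HN by (left; apply pow_lt; lra). specialize (H N). lra.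
Qed.

Lemma geom_eventually_le (q c : R) : 0 <= q < 1 -> 0 < c -> exists N0, forall N, (N0 <= N)%nat -> q ^ N <= c.
Proof.
  intros Hq Hc. assert (Hq' : Rabs q < 1) by (rewrite Rabs_right; lra).
  destruct (pow_lt_1_zero q Hq' c Hc) as [N0 HN0]. exists N0. intros N HN.
  specialize (HN0 N HN). rewrite Rabs_right in HN0 by (apply Rle_ge, pow_le; lra). lra.
Qed.

(** * Continued fractions *)

Lemma gauss_spec (x : R) : 0 < x < 1 -> irrational x ->
  (1 <= Int_part (/ x))%Z /\ / x = IZR (Int_part (/ x)) + gauss x /\
  0 < gauss x < 1 /\ irrational (gauss x).
Proof.
  intros Hx Hi. unfold gauss.
  assert (Hix : 1 < / x). { rewrite <- Rinv_1. apply Rinv_lt_contravar; lra. }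
  destruct (base_Int_part (/x)) as [B1 B2].
  set (a := Int_part (/x)) in *.
  assert (Ha : (1 <= a)%Z). { assert (0 < a)%Z by (apply lt_IZR; lra). lia. }
  assert (Hg0 : /x - IZR a <> 0).
  { intro E. refine (Hi 1%Z a _ _). lia. unfold Rdiv. replace (IZR a) with (/x) by lra.
    rewrite Rinv_inv. ring. }
  split; [exact Ha|]. split; [ring|]. split; [lra|].
  intros p q Hq E.
  assert (Hqr : IZR q <> 0) by (apply not_0_IZR; auto).
  assert (E2 : / x = (IZR a * IZR q + IZR p) / IZR q).
  { replace (/x) with (IZR a + (/x - IZR a)) by ring. rewrite E. field; auto. }
  assert (Hn : IZR a * IZR q + IZR p <> 0).
  { intro Z0. rewrite Z0 in E2. unfold Rdiv in E2. rewrite Rmult_0_l in E2.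
    assert (0 < /x) by lra. lra. }
  apply (Hi q (a*q+p)%Z).
  { intro Z0. apply Hn. rewrite <- mult_IZR, <- plus_IZR, Z0. reflexivity. }
  rewrite plus_IZR, mult_IZR.
  replace x with (/ / x) by (rewrite Rinv_inv; auto).
  rewrite E2. field. auto.
Qed.

(** [cf_tail k x] is G^k(x) and [cf_digitZ k x] is a_(k+1)(x), counted from 0. *)
Definition cf_tail (k : nat) (x : R) : R := Nat.iter k gauss x.

Definition cf_digitZ (k : nat) (x : R) : Z := Int_part (/ cf_tail k x).

Lemma cf_tail_S (k : nat) (x : R) : cf_tail (S k) x = gauss (cf_tail k x).
Proof. reflexivity. Qed.

Lemma cf_digit_S (k : nat) (x : R) : cf_digit (S k) x = IZR (cf_digitZ k x).
Proof. unfold cf_digit, cf_digitZ, cf_tail. replace (S k - 1)%nat with k by lia. reflexivity. Qed.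

Section Expansion.

Variable x : R.
Hypothesis x_range : 0 < x < 1.
Hypothesis x_irr : irrational x.

Lemma cf_tail_range (k : nat) : 0 < cf_tail k x < 1 /\ irrational (cf_tail k x).
Proof.
  induction k as [|k [IH1 IH2]]; [simpl; auto|].
  rewrite cf_tail_S. destruct (gauss_spec _ IH1 IH2) as (_&_&?&?). auto.
Qed.

Lemma cf_digitZ_spec (k : nat) :
  (1 <= cf_digitZ k x)%Z /\ / cf_tail k x = IZR (cf_digitZ k x) + cf_tail (S k) x.
Proof.
  destruct (cf_tail_range k) as [H1 H2].
  destruct (gauss_spec _ H1 H2) as (A&B&_). split; auto.
Qed.

End Expansion.

(** Convergents of a digit list written last digit first: the record holds
    (p_(n-1), q_(n-1), p_n, q_n). *)
Record convergent := mkConvergent { p_prev : R; q_prev : R; p_cur : R; q_cur : R }.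

Fixpoint convergents (l : list Z) : convergent :=
  match l with
  | nil => mkConvergent 1 0 0 1
  | a :: l' =>
      let c := convergents l' in
      mkConvergent (p_cur c) (q_cur c) (IZR a * p_cur c + p_prev c) (IZR a * q_cur c + q_prev c)
  end.

Fixpoint digit_prod (l : list Z) : R :=
  match l with nil => 1 | a :: l' => IZR a * digit_prod l' end.

Definition all_pos (l : list Z) : Prop := Forall (fun a => (1 <= a)%Z) l.

Lemma digit_prod_ge1 (l : list Z) : all_pos l -> 1 <= digit_prod l.
Proof. induction 1; simpl; [lra|]. apply IZR_le in H. nra. Qed.

Lemma convergents_spec (l : list Z) : all_pos l ->
  0 <= q_prev (convergents l) /\ digit_prod l <= q_cur (convergents l) /\
  (p_prev (convergents l) * q_cur (convergents l)
   - p_cur (convergents l) * q_prev (convergents l)) ^ 2 = 1.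
Proof.
  induction 1 as [|a l Ha Hl IH]; [simpl; repeat split; lra|].
  destruct IH as (A&C&E). pose proof (digit_prod_ge1 l Hl).
  apply IZR_le in Ha. simpl. repeat split; nra.
Qed.

Fixpoint digits_rev (x : R) (n : nat) : list Z :=
  match n with O => nil | S n' => cf_digitZ n' x :: digits_rev x n' end.

Lemma digits_rev_length (x : R) (n : nat) : length (digits_rev x n) = n.
Proof. induction n; simpl; auto. Qed.

Lemma digits_rev_Forall (x : R) (n : nat) (P : Z -> Prop) :
  (forall i, (i < n)%nat -> P (cf_digitZ i x)) -> Forall P (digits_rev x n).
Proof. induction n; intros H; simpl; constructor; auto. Qed.

Section Convergents.

Variable x : R.
Hypothesis x_range : 0 < x < 1.
Hypothesis x_irr : irrational x.

Lemma digits_rev_pos (n : nat) : all_pos (digits_rev x n).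
Proof. apply digits_rev_Forall. intros i _. apply (cf_digitZ_spec x x_range x_irr i). Qed.

Lemma convergents_mobius (n : nat) :
  let c := convergents (digits_rev x n) in let t := cf_tail n x in
  x * (q_cur c + t * q_prev c) = p_cur c + t * p_prev c.
Proof.
  induction n as [|n IH]; simpl.
  - unfold cf_tail. simpl. ring.
  - simpl in IH. destruct (cf_digitZ_spec x x_range x_irr n) as [_ E].
    destruct (cf_tail_range x x_range x_irr n) as [[T1 T2] _].
    set (t := cf_tail n x) in *. set (t' := cf_tail (S n) x) in *.
    set (a := IZR (cf_digitZ n x)) in *.
    assert (Ht : t * (a + t') = 1). { rewrite <- E. field. lra. }
    set (c := convergents (digits_rev x n)) in *.
    apply Rminus_diag_uniq. change (gauss t) with t'.
    replace (x * (a * q_cur c + q_prev c + t' * q_cur c) - (a * p_cur c + p_prev c + t' * p_cur c))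
      with ((a + t') * (x * (q_cur c + t * q_prev c) - (p_cur c + t * p_prev c))
            - (t * (a + t') - 1) * (x * q_prev c - p_prev c)) by ring.
    rewrite IH, Ht. ring.
Qed.

Lemma convergent_approx (n : nat) :
  let c := convergents (digits_rev x n) in Rabs (x - p_cur c / q_cur c) <= / q_cur c ^ 2.
Proof.
  intros c. pose proof (convergents_mobius n) as K. simpl in K. fold c in K.
  pose proof (digit_prod_ge1 _ (digits_rev_pos n)).
  destruct (convergents_spec _ (digits_rev_pos n)) as (A&B&E). fold c in A, B, E.
  destruct (cf_tail_range x x_range x_irr n) as [[T1 T2] _].
  set (t := cf_tail n x) in *.
  assert (Htq : 0 <= t * q_prev c) by nra.
  assert (Ed : x - p_cur c / q_cur c
               = t * (p_prev c * q_cur c - p_cur c * q_prev c) / (q_cur c * (q_cur c + t * q_prev c))).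
  { replace x with ((p_cur c + t * p_prev c) / (q_cur c + t * q_prev c)) by (rewrite <- K; field; nra).
    field. nra. }
  rewrite Ed. set (D := p_prev c * q_cur c - p_cur c * q_prev c) in *.
  assert (HD : Rabs D = 1) by (unfold Rabs; destruct Rcase_abs; nra).
  unfold Rdiv. rewrite Rabs_mult, Rabs_mult, HD, (Rabs_right t) by lra.
  rewrite Rabs_right by (apply Rle_ge, Rlt_le, Rinv_0_lt_compat; nra).
  rewrite Rmult_1_r.
  apply Rle_trans with (t * / (q_cur c * q_cur c)).
  - apply Rmult_le_compat_l; [lra|]. apply Rinv_le_contravar; nra.
  - simpl. rewrite Rmult_1_r. assert (0 < / (q_cur c * q_cur c)) by (apply Rinv_0_lt_compat; nra). nra.
Qed.

Lemma digit_prod_le (m n : nat) : (m <= n)%nat -> digit_prod (digits_rev x m) <= digit_prod (digits_rev x n).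
Proof.
  induction 1; [lra|]. simpl. destruct (cf_digitZ_spec x x_range x_irr m0) as [H1 _].
  apply IZR_le in H1. pose proof (digit_prod_ge1 _ (digits_rev_pos m0)). nra.
Qed.

Lemma digit_prod_mul_digit (m k n : nat) : (m <= k < n)%nat ->
  digit_prod (digits_rev x m) * IZR (cf_digitZ k x) <= digit_prod (digits_rev x n).
Proof.
  intros [H1 H2]. induction H2.
  - simpl. pose proof (digit_prod_le m k H1). destruct (cf_digitZ_spec x x_range x_irr k) as [D _].
    apply IZR_le in D. nra.
  - simpl. destruct (cf_digitZ_spec x x_range x_irr m0) as [D _]. apply IZR_le in D.
    pose proof (digit_prod_ge1 _ (digits_rev_pos m0)). nra.
Qed.

End Convergents.

Lemma Tmax_S (m : nat) (x : R) : Tmax (S m) x = Rmax (Tmax m x) (IZR (cf_digitZ m x)).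
Proof. simpl. rewrite cf_digit_S. auto. Qed.

Lemma Tmax_le_Tmax (x : R) (m n : nat) : (m <= n)%nat -> Tmax m x <= Tmax n x.
Proof. induction 1; [lra|]. rewrite Tmax_S. eapply Rle_trans; [apply IHle|apply Rmax_l]. Qed.

Lemma digit_le_Tmax (x : R) (k n : nat) : (k < n)%nat -> IZR (cf_digitZ k x) <= Tmax n x.
Proof.
  intros H. apply Rle_trans with (Tmax (S k) x). rewrite Tmax_S. apply Rmax_r.
  apply Tmax_le_Tmax. lia.
Qed.

Lemma Tmax_le (n : nat) (x M : R) : 0 <= M ->
  (forall i, (i < n)%nat -> IZR (cf_digitZ i x) <= M) -> Tmax n x <= M.
Proof.
  intros HM. induction n; intros H; simpl; auto. rewrite cf_digit_S.
  apply Rmax_lub. apply IHn. intros; apply H; lia. apply H; lia.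
Qed.

Lemma Tmax_record (x : R) (m n : nat) : (m <= n)%nat -> Tmax m x < Tmax n x ->
  exists k, (m <= k < n)%nat /\ Tmax n x <= IZR (cf_digitZ k x).
Proof.
  induction 1 as [|m0 Hle IHle]; intros H0; [lra|].
  rewrite Tmax_S in *. unfold Rmax in *. destruct (Rle_dec (Tmax m0 x) (IZR (cf_digitZ m0 x))).
  - exists m0. split; [lia|lra].
  - destruct (IHle H0) as (k&Hk&Hk2). exists k. split; [lia|lra].
Qed.

(** * Hausdorff null sets from countably many finite ball covers *)

Definition lsum (l : list R) : R := fold_right Rplus 0 l.

Lemma lsum_app (l1 l2 : list R) : lsum (l1 ++ l2) = lsum l1 + lsum l2.
Proof. induction l1; simpl; [ring|rewrite IHl1; ring]. Qed.

Lemma lsum_map_nonneg {A} (w : A -> R) (l : list A) : (forall a, 0 <= w a) -> 0 <= lsum (map w l).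
Proof. intros H. induction l; simpl; [lra|]. specialize (H a). lra. Qed.

Lemma lsum_map_mult {A} (c : R) (g : A -> R) (l : list A) :
  lsum (map (fun a => c * g a) l) = c * lsum (map g l).
Proof. induction l; simpl; [ring|rewrite IHl; ring]. Qed.

Lemma lsum_map_ext {A} (f g : A -> R) (l : list A) :
  (forall a, In a l -> f a = g a) -> lsum (map f l) = lsum (map g l).
Proof. induction l; simpl; intros; auto. rewrite H, IHl; auto. Qed.

Lemma lsum_flat_map {A B} (f : B -> R) (h : A -> list B) (L : list A) :
  lsum (map f (flat_map h L)) = lsum (map (fun a => lsum (map f (h a))) L).
Proof. induction L; simpl; auto. rewrite map_app, lsum_app, IHL. auto. Qed.

Lemma lsum_filter_le {A} (p : A -> bool) (f g : A -> R) (l : list A) :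
  (forall a, In a l -> p a = true -> f a <= g a) -> (forall a, In a l -> 0 <= g a) ->
  lsum (map f (filter p l)) <= lsum (map g l).
Proof.
  induction l; simpl; intros H1 H2; [lra|].
  assert (IH := IHl (fun b h => H1 b (or_intror h)) (fun b h => H2 b (or_intror h))).
  destruct (p a) eqn:E; simpl.
  - pose proof (H1 a (or_introl eq_refl) E). lra.
  - pose proof (H2 a (or_introl eq_refl)). lra.
Qed.

Lemma skipn_nth {A} (d : A) (l : list A) (n : nat) : (n < length l)%nat ->
  skipn n l = nth n l d :: skipn (S n) l.
Proof.
  revert n. induction l as [|a l IH]; intros n Hn; simpl in *; [lia|].
  destruct n; simpl; auto. apply IH. lia.
Qed.

Lemma sum_nth_le_lsum {A} (d : A) (w : A -> R) (N : nat) (l : list A) :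
  (S N <= length l)%nat -> (forall a, 0 <= w a) ->
  sum_f_R0 (fun j => w (nth j l d)) N <= lsum (map w l).
Proof.
  intros Hl Hw.
  assert (E : forall N l, (S N <= length l)%nat ->
    sum_f_R0 (fun j => w (nth j l d)) N + lsum (map w (skipn (S N) l)) = lsum (map w l)).
  { induction N0 as [|N0 IH]; intros l0 Hl0.
    - destruct l0 as [|a l0]; simpl in *; [lia|]. ring.
    - simpl. rewrite <- (IH l0) by lia. rewrite (skipn_nth d l0 (S N0)) by lia. simpl. ring. }
  rewrite <- (E N l Hl). pose proof (lsum_map_nonneg w (skipn (S N) l) Hw). lra.
Qed.

Definition concat_lists {A} (L : nat -> list A) (n : nat) : list A := flat_map L (seq 0 n).

Lemma concat_lists_S {A} (L : nat -> list A) (n : nat) :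
  concat_lists L (S n) = concat_lists L n ++ L n.
Proof.
  unfold concat_lists. rewrite seq_S, flat_map_app. simpl. rewrite app_nil_r. reflexivity.
Qed.

Lemma concat_lists_length {A} (L : nat -> list A) (n : nat) :
  (forall k, L k <> nil) -> (n <= length (concat_lists L n))%nat.
Proof.
  intros H. induction n; [simpl; lia|]. rewrite concat_lists_S, length_app.
  specialize (H n). destruct (L n); [congruence|simpl; lia].
Qed.

Lemma concat_lists_nth {A} (d : A) (L : nat -> list A) (i n m : nat) :
  (i < length (concat_lists L n))%nat -> (n <= m)%nat ->
  nth i (concat_lists L m) d = nth i (concat_lists L n) d.
Proof.
  intros Hi Hnm. assert (exists r, concat_lists L m = concat_lists L n ++ r) as [r ->].
  { induction Hnm as [|m Hnm [r Hr]]; [exists nil; rewrite app_nil_r; auto|].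
    exists (r ++ L m). rewrite concat_lists_S, Hr, app_assoc. auto. }
  apply app_nth1. auto.
Qed.

Lemma lsum_concat_lists {A} (w : A -> R) (L : nat -> list A) (N : nat) :
  lsum (map w (concat_lists L (S N))) = sum_f_R0 (fun k => lsum (map w (L k))) N.
Proof.
  induction N; rewrite concat_lists_S, map_app, lsum_app; [simpl; ring|].
  rewrite IHN. reflexivity.
Qed.

Lemma enumerate_lists {A} (d : A) (L : nat -> list A) : (forall k, L k <> nil) ->
  exists c : nat -> A,
    (forall k a, In a (L k) -> exists i, c i = a) /\
    (forall i, exists k, In (c i) (L k)) /\
    (forall w : A -> R, (forall a, 0 <= w a) -> forall N,
       sum_f_R0 (fun i => w (c i)) N <= sum_f_R0 (fun k => lsum (map w (L k))) N).
Proof.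
  intros HL. pose proof (concat_lists_length L) as Hlen.
  exists (fun i => nth i (concat_lists L (S i)) d). split; [|split].
  - intros k a Ha.
    assert (Hin : In a (concat_lists L (S k))).
    { rewrite concat_lists_S. apply in_or_app. auto. }
    destruct (In_nth _ _ d Hin) as (i&Hi&Hni). exists i.
    destruct (Nat.le_gt_cases k i) as [Hki|Hki].
    + rewrite (concat_lists_nth d L i (S k) (S i)) by (auto; lia). auto.
    + rewrite <- Hni. symmetry. apply concat_lists_nth; [|lia]. specialize (Hlen (S i) HL). lia.
  - intro i. specialize (Hlen (S i) HL).
    assert (Hin : In (nth i (concat_lists L (S i)) d) (concat_lists L (S i))) by (apply nth_In; lia).
    apply in_flat_map in Hin. destruct Hin as (k&_&Hk). eauto.
  - intros w Hw N. rewrite <- lsum_concat_lists.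
    rewrite (sum_eq _ (fun j => w (nth j (concat_lists L (S N)) d))).
    + apply sum_nth_le_lsum; auto.
    + intros j Hj. f_equal. symmetry. apply concat_lists_nth; [|lia]. specialize (Hlen (S j) HL). lia.
Qed.

(** Balls are pairs (center, radius). *)
Definition fine_ball_cover (s delta eps : R) (E : R -> Prop) (L : list (R * R)) : Prop :=
  (forall x, E x -> exists b, In b L /\ Rabs (x - fst b) <= snd b) /\
  (forall b, In b L -> 0 < 2 * snd b <= delta) /\
  lsum (map (fun b => Rpower (2 * snd b) s) L) <= eps.

Lemma fine_ball_cover_nonempty (s delta eps : R) (E : R -> Prop) (L : list (R * R)) :
  0 < s -> 0 < delta -> 0 < eps -> fine_ball_cover s delta eps E L ->
  exists L', L' <> nil /\ fine_ball_cover s delta (2 * eps) E L'.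
Proof.
  intros Hs Hd He (Hcov&Hrad&Hsum).
  set (r := Rmin delta (Rpower eps (/ s)) / 2).
  assert (Hr : 0 < 2 * r <= delta /\ Rpower (2 * r) s <= eps).
  { unfold r. assert (0 < Rmin delta (Rpower eps (/ s))) by (apply Rmin_pos; auto; apply Rpower_pos).
    replace (2 * (Rmin delta (Rpower eps (/ s)) / 2)) with (Rmin delta (Rpower eps (/ s))) by field.
    split; [split; auto; apply Rmin_l|].
    replace eps with (Rpower (Rpower eps (/ s)) s) at 2
      by (rewrite Rpower_mult, Rinv_l, Rpower_1 by lra; auto).
    apply Rle_Rpower_l; [lra|]. split; auto. apply Rmin_r. }
  exists (L ++ (0, r) :: nil). split; [destruct L; discriminate|]. split; [|split].
  - intros x Hx. destruct (Hcov x Hx) as (b&Hb&Hxb). exists b. split; auto. apply in_or_app. auto.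
  - intros b Hb. apply in_app_or in Hb. destruct Hb as [Hb|[<-|[]]]; auto. simpl. apply Hr.
  - rewrite map_app, lsum_app. simpl. lra.
Qed.

Lemma geom_half_sum (eps : R) (n : nat) :
  sum_f_R0 (fun k => eps / 2 ^ (S k)) n = eps * (1 - / 2 ^ (S n)).
Proof.
  induction n.
  - simpl. field.
  - change (sum_f_R0 (fun k => eps / 2 ^ (S k)) (S n)) with
      (sum_f_R0 (fun k => eps / 2 ^ (S k)) n + eps / 2 ^ (S (S n))).
    rewrite IHn. simpl. field. apply pow_nonzero. lra.
Qed.

Lemma Hs_null_countable_union (s : R) (E : R -> Prop) (Ek : nat -> R -> Prop) :
  0 < s ->
  (forall x, E x -> exists k, Ek k x) ->
  (forall k delta eps, 0 < delta -> 0 < eps -> exists L, fine_ball_cover s delta eps (Ek k) L) ->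
  Hs_null s E.
Proof.
  intros Hs HE HK delta eps Hd He.
  set (ek := fun k : nat => eps / 2 ^ (S (S k))).
  assert (Hek : forall k, 0 < ek k) by (intro k; apply Rdiv_lt_0_compat; auto; apply pow_lt; lra).
  assert (HL : forall k, exists L, L <> nil /\ fine_ball_cover s delta (2 * ek k) (Ek k) L).
  { intro k. destruct (HK k delta (ek k) Hd (Hek k)) as [L HLk].
    apply (fine_ball_cover_nonempty s delta (ek k) (Ek k) L); auto. }
  destruct (choice _ HL) as [L HL'].
  destruct (enumerate_lists (0, 0) L (fun k => proj1 (HL' k))) as (c&Hc_all&Hc_in&Hc_sum).
  exists (fun i x => Rabs (x - fst (c i)) <= snd (c i)), (fun i => 2 * snd (c i)).
  split; [|split; [|split]].
  - intros x Hx. destruct (HE x Hx) as [k Hk]. destruct (HL' k) as (_&Hcov&_&_).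
    destruct (Hcov x Hk) as (b&Hb&Hxb). destruct (Hc_all k b Hb) as [i <-]. eauto.
  - intro i. destruct (Hc_in i) as [k Hk]. destruct (HL' k) as (_&_&Hrad&_). auto.
  - intros i x y Hx Hy. replace (x - y) with ((x - fst (c i)) - (y - fst (c i))) by ring.
    eapply Rle_trans; [apply Rabs_triang|]. rewrite Rabs_Ropp. lra.
  - intro N. set (w := fun b : R * R => Rpower (2 * snd b) s).
    eapply Rle_trans; [apply (Hc_sum w (fun b => Rlt_le _ _ (Rpower_pos _ _)))|].
    apply Rle_trans with (sum_f_R0 (fun k => eps / 2 ^ (S k)) N).
    + apply sum_Rle. intros k _. destruct (HL' k) as (_&_&_&Hsum).
      replace (eps / 2 ^ S k) with (2 * ek k) by (unfold ek; simpl; field; apply pow_nonzero; lra).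
      auto.
    + rewrite geom_half_sum. assert (0 < / 2 ^ (S N)) by (apply Rinv_0_lt_compat, pow_lt; lra). nra.
Qed.

(** * Upper bound *)

Definition sqrt_exp_band (alpha theta : R) (N0 : nat) (T : nat -> R) : Prop :=
  forall n, (N0 <= n)%nat ->
  alpha * exp (- (theta / 2)) * exp (sqrt (INR n)) <= T n <= alpha * exp (theta / 2) * exp (sqrt (INR n)).

Lemma F_set_sqrt_exp_band (alpha theta x : R) : 0 < alpha -> 0 < theta -> F_set (1/2) alpha x ->
  exists N0, sqrt_exp_band alpha theta N0 (fun n => Tmax n x).
Proof.
  intros Ha Ht (_&_&Hcv).
  set (e1 := alpha - alpha * exp (- (theta/2))). set (e2 := alpha * exp (theta/2) - alpha).
  assert (He1 : 0 < e1).
  { unfold e1. assert (exp (- (theta/2)) < 1) by (rewrite <- exp_0; apply exp_increasing; lra). nra. }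
  assert (He2 : 0 < e2).
  { unfold e2. assert (1 < exp (theta/2)) by (rewrite <- exp_0; apply exp_increasing; lra). nra. }
  destruct (Hcv (Rmin e1 e2) (Rmin_pos _ _ He1 He2)) as [N HN].
  exists (S N). intros n Hn. destruct n as [|n]; [lia|].
  specialize (HN n ltac:(lia)). unfold Rdist in HN. rewrite Rpower_half_sqrt in HN.
  pose proof (Rmin_l e1 e2). pose proof (Rmin_r e1 e2).
  set (E := exp (sqrt (INR (S n)))) in *. assert (HE : 0 < E) by apply exp_pos.
  set (T := Tmax (S n) x) in *.
  apply Rabs_def2 in HN. destruct HN as [A1 A2].
  assert (T / E < alpha * exp (theta/2)) by (unfold e2 in *; lra).
  assert (alpha * exp (- (theta/2)) < T / E) by (unfold e1 in *; lra).
  replace T with ((T / E) * E) by (field; lra).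
  split; nra.
Qed.

Lemma sqrt_window (theta R0 : R) (N0 n : nat) : 0 < theta -> 1 / theta <= R0 -> 6 * theta <= R0 ->
  R0 * R0 + 2 * INR N0 <= INR n ->
  exists d : nat, (1 <= d <= n)%nat /\ (N0 <= n - d)%nat /\ INR d <= 3 * theta * sqrt (INR n) /\
    sqrt (INR (n - d)) + theta < sqrt (INR n).
Proof.
  intros Ht H1 H2 Hn.
  set (sq := sqrt (INR n)).
  assert (Hsq : sq * sq = INR n) by (apply sqrt_sqrt; apply pos_INR).
  assert (HsqR : R0 <= sq).
  { apply sqrt_INR_ge; [|pose proof (pos_INR N0); lra].
    apply Rle_trans with (1 / theta); [|auto]. apply Rlt_le, Rdiv_lt_0_compat; lra. }
  assert (Hts : 1 <= theta * sq).
  { unfold Rdiv in H1. rewrite Rmult_1_l in H1.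
    apply Rmult_le_compat_l with (r := theta) in H1; [|lra]. rewrite Rinv_r in H1 by lra. nra. }
  destruct (nat_floor (3 * theta * sq)) as [d [Hd1 Hd2]]; [nra|].
  assert (Hd4 : INR d <= INR n / 2) by nra.
  assert (Hdn : (d <= n)%nat) by (apply INR_le; pose proof (pos_INR n); lra).
  exists d. split; [|split; [|split; [auto|]]].
  - split; auto. destruct d; [simpl in Hd1; nra|lia].
  - apply INR_le. rewrite minus_INR by auto. assert (0 <= R0 * R0) by nra. lra.
  - rewrite minus_INR by auto. set (sm := sqrt (INR n - INR d)).
    assert (Hsm : sm * sm = INR n - INR d) by (apply sqrt_sqrt; lra).
    assert (Hsm0 : 0 <= sm) by apply sqrt_pos.
    assert (sm <= sq) by (apply sqrt_le_1_alt; pose proof (pos_INR d); lra).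
    destruct (Rlt_or_le (sm + theta) sq); auto.
    assert ((sq - sm) * (sq + sm) = INR d) by nra.
    assert ((sq - sm) * (sq + sm) <= theta * (2 * sq)) by nra. lra.
Qed.

(** Within [~ 3 theta sqrt n] steps [T] must set a record of size [~ e^(sqrt n)], so
    [ln P] gains [~ sqrt n] every [~ 3 theta sqrt n] steps. *)
Lemma band_record_growth (alpha theta : R) (N0 : nat) :
  0 < alpha -> 0 < theta -> exists N1 : nat, forall T P : nat -> R,
  (forall n, 1 <= P n) ->
  (forall m n, (m <= n)%nat -> T m < T n -> P m * T n <= P n) ->
  sqrt_exp_band alpha theta N0 T ->
  forall n, exp ((INR n - INR N1) / (4 * theta)) <= P n.
Proof.
  intros Ha Ht.
  set (K := / (4 * theta)). assert (HK : 0 < K) by (unfold K; apply Rinv_0_lt_compat; lra).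
  set (c := ln alpha - theta / 2).
  set (R0 := 1 / theta + 6 * theta + 4 * Rabs c + 1).
  assert (HR0 : 1/theta <= R0 /\ 6 * theta <= R0 /\ 4 * Rabs c <= R0 /\ 1 <= R0).
  { unfold R0. assert (0 < 1/theta) by (apply Rdiv_lt_0_compat; lra). pose proof (Rabs_pos c). lra. }
  destruct HR0 as (HR1&HR2&HR3&HR4).
  destruct (nat_above (R0 * R0 + 2 * INR N0)) as [N1 HN1].
  exists N1. intros T P HP HPT HT n.
  replace ((INR n - INR N1) / (4 * theta)) with (K * (INR n - INR N1)) by (unfold K; field; lra).
  induction n as [n IH] using lt_wf_ind.
  destruct (Nat.le_gt_cases n N1) as [Hle|Hgt].
  { eapply Rle_trans; [|apply HP]. rewrite <- exp_0. apply exp_le. apply le_INR in Hle. nra. }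
  apply lt_INR in Hgt.
  destruct (sqrt_window theta R0 N0 n Ht HR1 HR2 ltac:(lra)) as (d&Hd1&HdN0&Hd&Hgap).
  set (m := (n - d)%nat) in *. set (sq := sqrt (INR n)) in *.
  assert (Hm : INR m = INR n - INR d) by (unfold m; rewrite minus_INR by lia; auto).
  specialize (IH m ltac:(unfold m; lia)).
  destruct (HT n ltac:(lia)) as [Tn_low _]. destruct (HT m HdN0) as [_ Tm_up]. fold sq in Tn_low.
  assert (HTmn : T m < T n).
  { eapply Rle_lt_trans; [apply Tm_up|]. eapply Rlt_le_trans; [|apply Tn_low].
    rewrite !Rmult_assoc. apply Rmult_lt_compat_l; auto. rewrite <- !exp_plus.
    apply exp_increasing. lra. }
  eapply Rle_trans; [|apply (HPT m n); auto; unfold m; lia].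
  assert (Hlow : exp (c + sq) = alpha * exp (- (theta / 2)) * exp sq).
  { unfold c. rewrite <- (exp_ln alpha) at 2 by auto. rewrite <- !exp_plus. f_equal; ring. }
  apply Rle_trans with (exp (K * (INR m - INR N1)) * exp (c + sq)).
  2:{ apply Rmult_le_compat; auto; try (left; apply exp_pos). lra. }
  rewrite <- exp_plus. apply exp_le.
  assert (HKd : K * INR d <= 3 / 4 * sq).
  { apply Rle_trans with (K * (3 * theta * sq)); [apply Rmult_le_compat_l; lra|].
    unfold K. right. field. lra. }
  assert (HsqR : R0 <= sq).
  { apply sqrt_INR_ge; [lra|]. pose proof (pos_INR N0). nra. }
  assert (Hc : 0 <= c + sq / 4).
  { pose proof (Rabs_pos c). destruct (Rle_or_lt 0 c); [lra|]. rewrite Rabs_left in HR3 by auto. lra. }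
  rewrite Hm. nra.
Qed.

Lemma zeta_step (k r : R) : 1 <= k -> 0 < r ->
  r * Rpower (k + 1) (- (r + 1)) <= Rpower k (- r) - Rpower (k + 1) (- r).
Proof.
  intros Hk Hr.
  assert (H1 : Rpower k (-r) = Rpower (k+1) (-r) * Rpower (k/(k+1)) (-r)).
  { rewrite Rpower_mult_distr by (try apply Rdiv_lt_0_compat; lra). f_equal. field. lra. }
  assert (H2 : 1 + r / (k+1) <= Rpower (k/(k+1)) (-r)).
  { unfold Rpower. eapply Rle_trans; [|apply exp_ineq1_le].
    assert (ln (k/(k+1)) <= k/(k+1) - 1).
    { pose proof (exp_ineq1_le (ln (k/(k+1)))). rewrite exp_ln in H by (apply Rdiv_lt_0_compat; lra). lra. }
    assert (k/(k+1) - 1 = - (1/(k+1))) by (field; lra).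
    unfold Rdiv in *. nra. }
  assert (H3 : Rpower (k+1) (-(r+1)) = Rpower (k+1) (-r) * / (k+1)).
  { replace (-(r+1)) with (-r + - (1)) by ring. rewrite Rpower_plus. f_equal.
    rewrite Rpower_Ropp, Rpower_1 by lra. auto. }
  rewrite H1, H3. pose proof (Rpower_pos (k+1) (-r)).
  unfold Rdiv in H2. nra.
Qed.

Definition digits_upto (B : nat) : list Z := map Z.of_nat (seq 1 B).

Lemma digit_power_sum_le (t : R) (B : nat) : 1 < t ->
  lsum (map (fun a => Rpower (IZR a) (-t)) (digits_upto B)) <= 1 + 1 / (t - 1).
Proof.
  intros Ht. set (r := t - 1). assert (Hr : 0 < r) by (unfold r; lra).
  assert (Hr' : 0 < / r) by (apply Rinv_0_lt_compat; auto).
  assert (H : forall n, lsum (map (fun a => Rpower (IZR a) (-t)) (digits_upto (S n)))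
                        <= 1 + (1 - Rpower (INR (S n)) (-r)) / r).
  { induction n.
    - simpl. change (IZR (Z.of_nat 1)) with 1. rewrite !Rpower_1_base. unfold Rdiv. lra.
    - assert (Es : lsum (map (fun a => Rpower (IZR a) (-t)) (digits_upto (S (S n)))) =
        lsum (map (fun a => Rpower (IZR a) (-t)) (digits_upto (S n))) + Rpower (INR (S n) + 1) (-t)).
      { unfold digits_upto at 1. rewrite seq_S, !map_app, lsum_app. f_equal.
        replace (1 + S n)%nat with (S (S n)) by lia.
        cbv [lsum map fold_right]. rewrite <- INR_IZR_INZ, S_INR. ring. }
      rewrite Es.
      assert (1 <= INR (S n)) by (rewrite S_INR; pose proof (pos_INR n); lra).
      pose proof (zeta_step (INR (S n)) r H Hr) as Z1.
      replace (-(r+1)) with (-t) in Z1 by (unfold r; ring).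
      replace (INR (S (S n))) with (INR (S n) + 1) by (rewrite (S_INR (S n)); ring).
      unfold Rdiv in *.
      apply Rmult_le_compat_l with (r := /r) in Z1; [|lra].
      replace (/ r * (r * Rpower (INR (S n) + 1) (- t))) with (Rpower (INR (S n) + 1) (- t)) in Z1
        by (field; lra).
      nra. }
  destruct B. { simpl. unfold r in *. unfold Rdiv. lra. }
  eapply Rle_trans; [apply H|]. pose proof (Rpower_pos (INR (S B)) (-r)).
  fold r. unfold Rdiv. nra.
Qed.

Fixpoint digit_tuples (B N : nat) : list (list Z) :=
  match N with
  | O => nil :: nil
  | S N' => flat_map (fun l => map (fun a => a :: l) (digits_upto B)) (digit_tuples B N')
  end.

Fixpoint list_prod_map (g : Z -> R) (l : list Z) : R :=
  match l with nil => 1 | a :: l' => g a * list_prod_map g l' end.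

Lemma list_prod_map_pos (g : Z -> R) (l : list Z) : (forall a, 0 < g a) -> 0 < list_prod_map g l.
Proof. intros H. induction l; simpl; [lra|]. specialize (H a). nra. Qed.

Lemma lsum_digit_tuples (g : Z -> R) (B N : nat) :
  lsum (map (list_prod_map g) (digit_tuples B N)) = (lsum (map g (digits_upto B))) ^ N.
Proof.
  induction N; simpl. ring.
  rewrite lsum_flat_map, <- IHN, <- lsum_map_mult.
  apply lsum_map_ext. intros l _. rewrite map_map. simpl.
  rewrite Rmult_comm, <- lsum_map_mult. apply lsum_map_ext. intros; ring.
Qed.

Lemma In_digit_tuples (B : nat) (l : list Z) :
  Forall (fun a => (1 <= a <= Z.of_nat B)%Z) l -> In l (digit_tuples B (length l)).
Proof.
  induction l as [|a l IH]; intros HF; simpl; auto.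
  inversion HF; subst. apply in_flat_map. exists l. split; auto.
  apply in_map_iff. exists a. split; auto. unfold digits_upto. apply in_map_iff.
  exists (Z.to_nat a). split. lia. apply in_seq. lia.
Qed.

Lemma digit_tuples_pos (B N : nat) (l : list Z) : In l (digit_tuples B N) -> all_pos l.
Proof.
  revert l. induction N; simpl; intros l H.
  - destruct H as [<-|[]]. constructor.
  - apply in_flat_map in H. destruct H as (l'&H1&H2). apply in_map_iff in H2.
    destruct H2 as (a&<-&Ha). constructor; [|apply IHN; auto].
    unfold digits_upto in Ha. apply in_map_iff in Ha.
    destruct Ha as (n&<-&Hn). apply in_seq in Hn. lia.
Qed.

Lemma Rpower_digit_prod (y : R) (l : list Z) : all_pos l ->
  Rpower (digit_prod l) y = list_prod_map (fun a => Rpower (IZR a) y) l.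
Proof.
  induction 1; simpl. apply Rpower_1_base.
  rewrite <- IHForall. apply IZR_le in H. pose proof (digit_prod_ge1 _ H0).
  rewrite Rpower_mult_distr; auto; lra.
Qed.

(** Trading [s - s'] of the exponent for the lower bound [exp a <= P] on the digit product. *)
Lemma cylinder_weight_le (s s' a P Q : R) : 0 < s' < s -> 0 <= a -> exp a <= P <= Q ->
  Rpower (2 * / Q ^ 2) s <= Rpower 2 s * exp (-2 * (s - s') * a) * Rpower P (- (2 * s')).
Proof.
  intros Hs Ha [H1 H2].
  assert (HP1 : 1 <= P) by (pose proof (exp_ineq1_le a); lra).
  apply Rle_trans with (Rpower (2 * / P ^ 2) s).
  { apply Rle_Rpower_l; [lra|]. split.
    - apply Rmult_lt_0_compat; [lra|]. apply Rinv_0_lt_compat. nra.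
    - apply Rmult_le_compat_l; [lra|]. apply Rinv_le_contravar; nra. }
  unfold Rpower. rewrite <- !exp_plus. apply exp_le.
  rewrite ln_mult by (try lra; apply Rinv_0_lt_compat; nra).
  rewrite ln_Rinv by nra. rewrite ln_pow by lra. simpl INR.
  assert (a <= ln P).
  { rewrite <- (ln_exp a). destruct H1 as [H1|H1]; [left; apply ln_increasing; auto; apply exp_pos|].
    rewrite H1. lra. }
  nra.
Qed.

Definition cylinder_balls (B N : nat) (a : R) : list (R * R) :=
  map (fun l => (p_cur (convergents l) / q_cur (convergents l), / q_cur (convergents l) ^ 2))
      (filter (fun l => if Rle_dec (exp a) (digit_prod l) then true else false) (digit_tuples B N)).

Lemma cylinder_balls_cover (B N : nat) (a x : R) : 0 < x < 1 -> irrational x ->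
  (forall i, (i < N)%nat -> (cf_digitZ i x <= Z.of_nat B)%Z) ->
  exp a <= digit_prod (digits_rev x N) ->
  exists b, In b (cylinder_balls B N a) /\ Rabs (x - fst b) <= snd b.
Proof.
  intros Hx Hi HB Ha. set (l := digits_rev x N).
  assert (Hin : In l (digit_tuples B N)).
  { rewrite <- (digits_rev_length x N). apply In_digit_tuples. apply digits_rev_Forall.
    intros i Hi'. destruct (cf_digitZ_spec x Hx Hi i) as [D1 _]. auto. }
  eexists. split.
  - apply in_map_iff. exists l. split; [reflexivity|]. apply filter_In. split; auto.
    destruct (Rle_dec (exp a) (digit_prod l)); auto.
  - apply convergent_approx; auto.
Qed.

Lemma cylinder_balls_radius (B N : nat) (a : R) (b : R * R) : In b (cylinder_balls B N a) ->
  0 < 2 * snd b <= 2 * / exp a ^ 2.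
Proof.
  intros Hin. apply in_map_iff in Hin. destruct Hin as (l&<-&Hl).
  apply filter_In in Hl. destruct Hl as [Hl Hf].
  destruct (Rle_dec (exp a) (digit_prod l)) as [Hle|]; [|discriminate].
  destruct (convergents_spec l (digit_tuples_pos B N l Hl)) as (_&Hq&_).
  pose proof (exp_pos a). simpl.
  split. { apply Rmult_lt_0_compat; [lra|]. apply Rinv_0_lt_compat. nra. }
  apply Rmult_le_compat_l; [lra|]. apply Rinv_le_contravar; [nra|]. simpl. nra.
Qed.

Lemma cylinder_balls_sum (B N : nat) (a s s' : R) : 0 < s' < s -> 1/2 < s' -> 0 <= a ->
  lsum (map (fun b => Rpower (2 * snd b) s) (cylinder_balls B N a))
  <= Rpower 2 s * exp (-2 * (s - s') * a) * (1 + 1 / (2 * s' - 1)) ^ N.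
Proof.
  intros Hs Hs' Ha. unfold cylinder_balls. rewrite map_map. simpl.
  set (g := fun z : Z => Rpower (IZR z) (- (2 * s'))).
  set (C := Rpower 2 s * exp (-2 * (s - s') * a)).
  assert (HC : 0 < C) by (apply Rmult_lt_0_compat; [apply Rpower_pos|apply exp_pos]).
  apply Rle_trans with (lsum (map (fun l => C * list_prod_map g l) (digit_tuples B N))).
  { apply lsum_filter_le.
    - intros l Hl Hf. destruct (Rle_dec (exp a) (digit_prod l)) as [Hle|]; [|discriminate].
      destruct (convergents_spec l (digit_tuples_pos B N l Hl)) as (_&Hq&_).
      unfold C, g. rewrite <- Rpower_digit_prod by (eapply digit_tuples_pos; eauto).
      apply cylinder_weight_le; auto.
    - intros l _. apply Rlt_le, Rmult_lt_0_compat; auto.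
      apply list_prod_map_pos. intro; apply Rpower_pos. }
  rewrite lsum_map_mult, lsum_digit_tuples.
  apply Rmult_le_compat_l; [lra|]. apply pow_incr. split.
  - apply lsum_map_nonneg. intro; left; apply Rpower_pos.
  - apply digit_power_sum_le. lra.
Qed.

Lemma half_ge_x_exp (z : R) : 0 <= z -> z * exp (-2 * z) <= 1/2.
Proof.
  intros Hz. assert (exp (2 * z) >= 2 * z) by (pose proof (exp_ineq1_le (2 * z)); lra).
  replace (-2 * z) with (- (2 * z)) by ring. rewrite exp_Ropp.
  pose proof (exp_pos (2 * z)).
  apply Rmult_le_reg_r with (r := exp (2 * z)); auto.
  rewrite Rmult_assoc, Rinv_l by lra. nra.
Qed.

Lemma band_digit_prod_growth (alpha theta : R) (k : nat) : 0 < alpha -> 0 < theta ->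
  exists N1 : nat, forall x, 0 < x < 1 -> irrational x -> sqrt_exp_band alpha theta k (fun n => Tmax n x) ->
  forall n, exp (/ (4 * theta) * (INR n - INR N1)) <= digit_prod (digits_rev x n).
Proof.
  intros Ha Ht. destruct (band_record_growth alpha theta k Ha Ht) as [N1 HN1].
  exists N1. intros x Hx Hi Hband n.
  replace (/ (4 * theta) * (INR n - INR N1)) with ((INR n - INR N1) / (4 * theta)) by (field; lra).
  apply (HN1 (fun n => Tmax n x) (fun n => digit_prod (digits_rev x n))); auto.
  - intro n'. apply digit_prod_ge1, digits_rev_pos; auto.
  - intros m n' Hmn HT. destruct (Tmax_record x m n' Hmn HT) as (k'&Hk'&Hk2).
    eapply Rle_trans; [|apply (digit_prod_mul_digit x Hx Hi m k' n'); auto].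
    apply Rmult_le_compat_l; auto. pose proof (digit_prod_ge1 _ (digits_rev_pos x Hx Hi m)). lra.
Qed.

Lemma cylinder_balls_sum_geom (B N N1 : nat) (s s' K : R) : 1/2 < s' < s -> 0 < K ->
  1 + 1 / (2 * s' - 1) <= (s - s') * K -> (N1 <= N)%nat ->
  lsum (map (fun b => Rpower (2 * snd b) s) (cylinder_balls B N (K * (INR N - INR N1))))
  <= Rpower 2 s * exp (2 * (1 + 1 / (2 * s' - 1)) * INR N1) * (1/2) ^ N.
Proof.
  intros Hs HK HKZ HN. set (Zt := 1 + 1 / (2 * s' - 1)) in *.
  assert (HZt : 0 < Zt) by (unfold Zt; assert (0 < 1 / (2 * s' - 1)) by (apply Rdiv_lt_0_compat; lra); lra).
  apply le_INR in HN.
  eapply Rle_trans; [apply (cylinder_balls_sum B N _ s s'); try split; try lra; nra|]. fold Zt.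
  assert (E : exp (-2 * (s - s') * (K * (INR N - INR N1))) <= exp (2 * Zt * INR N1) * exp (-2 * Zt) ^ N).
  { rewrite <- exp_INR_mult, <- exp_plus. apply exp_le. nra. }
  set (C := Rpower 2 s * exp (2 * Zt * INR N1)).
  assert (HC : 0 < C) by (apply Rmult_lt_0_compat; [apply Rpower_pos|apply exp_pos]).
  apply Rle_trans with (C * (Zt * exp (-2 * Zt)) ^ N).
  - rewrite Rpow_mult_distr.
    replace (C * (Zt ^ N * exp (-2 * Zt) ^ N))
      with (Rpower 2 s * (exp (2 * Zt * INR N1) * exp (-2 * Zt) ^ N) * Zt ^ N) by (unfold C; ring).
    apply Rmult_le_compat_r; [apply pow_le; lra|].
    apply Rmult_le_compat_l; [left; apply Rpower_pos|auto].
  - apply Rmult_le_compat_l; [lra|]. apply pow_incr. split.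
    + pose proof (exp_pos (-2 * Zt)). nra.
    + apply half_ge_x_exp. lra.
Qed.

Lemma band_piece_fine_cover (alpha s s' theta : R) (k : nat) :
  0 < alpha -> 1/2 < s' < s -> 0 < theta -> 4 * theta * (1 + 1 / (2 * s' - 1)) <= s - s' ->
  forall delta eps, 0 < delta -> 0 < eps -> exists L, fine_ball_cover s delta eps
    (fun x => F_set (1/2) alpha x /\ sqrt_exp_band alpha theta k (fun n => Tmax n x)) L.
Proof.
  intros Ha Hs Ht Hst delta eps Hd He.
  set (K := / (4 * theta)). assert (HK : 0 < K) by (unfold K; apply Rinv_0_lt_compat; lra).
  assert (HKZ : 1 + 1 / (2 * s' - 1) <= (s - s') * K).
  { unfold K. apply Rmult_le_reg_r with (4 * theta); [lra|]. rewrite Rmult_assoc, Rinv_l by lra. lra. }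
  destruct (band_digit_prod_growth alpha theta k Ha Ht) as [N1 HN1].
  set (C1 := Rpower 2 s * exp (2 * (1 + 1 / (2 * s' - 1)) * INR N1)).
  assert (HC1 : 0 < C1) by (apply Rmult_lt_0_compat; [apply Rpower_pos|apply exp_pos]).
  destruct (geom_eventually_le (1/2) (eps / C1)) as [Na HNa]; [lra|apply Rdiv_lt_0_compat; lra|].
  destruct (geom_eventually_le (exp (-2 * K)) (delta / (2 * exp (2 * K * INR N1)))) as [Nb HNb].
  { split; [left; apply exp_pos|]. rewrite <- exp_0. apply exp_increasing. lra. }
  { apply Rdiv_lt_0_compat; auto. apply Rmult_lt_0_compat; [lra|apply exp_pos]. }
  set (N := Nat.max (Nat.max Na Nb) (Nat.max k N1)).
  specialize (HNa N ltac:(unfold N; lia)). specialize (HNb N ltac:(unfold N; lia)).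
  set (B := Z.to_nat (Int_part (alpha * exp (theta / 2) * exp (sqrt (INR N))))).
  exists (cylinder_balls B N (K * (INR N - INR N1))). split; [|split].
  - intros x [(Hx&Hi&_) Hband]. apply cylinder_balls_cover; auto.
    intros i Hi'. unfold B. rewrite Z2Nat.id.
    + apply Int_part_ge. eapply Rle_trans; [apply digit_le_Tmax; eauto|]. apply Hband. unfold N; lia.
    + apply Int_part_ge. simpl. repeat (apply Rmult_le_pos; try lra); left; apply exp_pos.
  - intros b Hb. destruct (cylinder_balls_radius B N _ b Hb) as [Hb1 Hb2]. split; auto.
    eapply Rle_trans; [apply Hb2|].
    replace (/ exp (K * (INR N - INR N1)) ^ 2) with (exp (2 * K * INR N1) * exp (-2 * K) ^ N).
    2:{ rewrite <- (exp_INR_mult _ 2), <- exp_Ropp, <- exp_INR_mult, <- exp_plus.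
        f_equal. simpl INR. ring. }
    apply Rmult_le_compat_l with (r := 2 * exp (2 * K * INR N1)) in HNb.
    2:{ apply Rlt_le, Rmult_lt_0_compat; [lra|apply exp_pos]. }
    replace (2 * exp (2 * K * INR N1) * (delta / (2 * exp (2 * K * INR N1)))) with delta in HNb.
    2:{ field. pose proof (exp_pos (2 * K * INR N1)). lra. }
    lra.
  - eapply Rle_trans; [apply (cylinder_balls_sum_geom B N N1 s s' K); auto; unfold N; lia|]. fold C1.
    apply Rmult_le_compat_l with (r := C1) in HNa; [|lra].
    replace (C1 * (eps / C1)) with eps in HNa by (field; lra). lra.
Qed.

Lemma upper_bound (alpha s : R) : 0 < alpha -> 1/2 < s -> Hs_null s (F_set (1/2) alpha).
Proof.
  intros Ha Hs.
  set (s' := (s + 1/2) / 2).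
  set (theta := (s - s') / (4 * (1 + 1 / (2 * s' - 1)))).
  assert (HZ : 0 < 1 + 1 / (2 * s' - 1)) by (assert (0 < 1 / (2 * s' - 1)) by (apply Rdiv_lt_0_compat; unfold s'; lra); lra).
  assert (Ht : 0 < theta) by (apply Rdiv_lt_0_compat; [unfold s'|]; lra).
  apply (Hs_null_countable_union s _
    (fun k x => F_set (1/2) alpha x /\ sqrt_exp_band alpha theta k (fun n => Tmax n x))); [lra| |].
  - intros x Hx. destruct (F_set_sqrt_exp_band alpha theta x Ha Ht Hx) as [N0 HN0]. eauto.
  - intros k. apply (band_piece_fine_cover alpha s s' theta k Ha); [unfold s'; split; lra|auto|].
    unfold theta. right. field. unfold s'. split; lra.
Qed.

(** * Lower bound *)

Lemma lsum_remove_le (e : nat -> R) (j : nat) (L : list nat) : (forall i, 0 <= e i) ->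
  lsum (map e (remove Nat.eq_dec j L)) <= lsum (map e L).
Proof.
  intros He. induction L as [|a L IH]; simpl; [lra|].
  destruct (Nat.eq_dec j a); simpl; specialize (He a); lra.
Qed.

Lemma lsum_remove_In (e : nat -> R) (j : nat) (L : list nat) : (forall i, 0 <= e i) -> In j L ->
  e j + lsum (map e (remove Nat.eq_dec j L)) <= lsum (map e L).
Proof.
  intros He. induction L as [|a L IH]; simpl; intros H; [contradiction|].
  destruct (Nat.eq_dec j a).
  - subst. pose proof (lsum_remove_le e a L He). lra.
  - simpl. destruct H as [H|H]; [congruence|]. specialize (IH H). lra.
Qed.

Lemma lsum_remove_NoDup (e : nat -> R) (j : nat) (L : list nat) : NoDup L -> In j L ->
  lsum (map e L) = e j + lsum (map e (remove Nat.eq_dec j L)).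
Proof.
  induction 1; simpl; intros Hin; [contradiction|].
  destruct (Nat.eq_dec j x).
  - subst. rewrite notin_remove; auto.
  - destruct Hin as [Hin|Hin]; [congruence|]. simpl. rewrite IHNoDup; auto. ring.
Qed.

Lemma NoDup_remove_nat (j : nat) (L : list nat) : NoDup L -> NoDup (remove Nat.eq_dec j L).
Proof.
  induction 1; simpl. constructor.
  destruct (Nat.eq_dec j x); auto. constructor; auto.
  intro H1. apply in_remove in H1. tauto.
Qed.

Lemma lsum_NoDup_le_seq (e : nat -> R) (N : nat) (L : list nat) : (forall i, 0 <= e i) ->
  NoDup L -> (forall i, In i L -> (i < N)%nat) -> lsum (map e L) <= lsum (map e (seq 0 N)).
Proof.
  intros He. revert L. induction N; intros L HL Hb.
  - destruct L; simpl; [lra|]. specialize (Hb n (or_introl eq_refl)). lia.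
  - rewrite seq_S, map_app, lsum_app. simpl. destruct (in_dec Nat.eq_dec N L) as [HN|HN].
    + rewrite (lsum_remove_NoDup e N L HL HN).
      assert (lsum (map e (remove Nat.eq_dec N L)) <= lsum (map e (seq 0 N))).
      { apply IHN; [apply NoDup_remove_nat; auto|]. intros i Hi. apply in_remove in Hi.
        destruct Hi as [Hi HiN]. specialize (Hb i Hi). lia. }
      lra.
    + assert (lsum (map e L) <= lsum (map e (seq 0 N))).
      { apply IHN; auto. intros i Hi. specialize (Hb i Hi). assert (i <> N) by (intro; subst; tauto). lia. }
      specialize (He N). lra.
Qed.

Lemma lsum_map_seq (e : nat -> R) (N : nat) : lsum (map e (seq 0 (S N))) = sum_f_R0 e N.
Proof. induction N; [simpl; ring|]. rewrite seq_S, map_app, lsum_app, IHN. simpl. ring. Qed.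

Lemma interval_cover_length (lo hi : nat -> R) (L : list nat) (a b : R) :
  (forall i, lo i < hi i) ->
  (forall x, a <= x <= b -> exists i, In i L /\ lo i < x < hi i) ->
  b - a <= lsum (map (fun i => hi i - lo i) L).
Proof.
  intros Hlh. remember (length L) as n eqn:Hn. revert L Hn a.
  induction n as [n IH] using lt_wf_ind. intros L Hn a Hc.
  assert (Hnn : forall i, 0 <= hi i - lo i) by (intro i; specialize (Hlh i); lra).
  destruct (Rle_or_lt a b) as [Hab|Hab]; [|pose proof (lsum_map_nonneg _ L Hnn); lra].
  destruct (Hc a) as (j&Hj&Hj1&Hj2); [lra|].
  pose proof (lsum_remove_In (fun i => hi i - lo i) j L Hnn Hj) as Hrem.
  pose proof (lsum_map_nonneg _ (remove Nat.eq_dec j L) Hnn).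
  destruct (Rle_or_lt b (hi j)) as [Hb|Hb]; [simpl in Hrem; lra|].
  assert (b - hi j <= lsum (map (fun i => hi i - lo i) (remove Nat.eq_dec j L))).
  { apply (IH (length (remove Nat.eq_dec j L))); auto.
    - pose proof (remove_length_lt Nat.eq_dec L j Hj). lia.
    - intros x Hx. destruct (Hc x) as (i&Hi&Hi1&Hi2); [lra|].
      exists i. split; [|lra]. apply in_in_remove; auto. intro E. subst. lra. }
  simpl in Hrem. lra.
Qed.

Lemma interval_finite_subcover (lo hi : nat -> R) (a b : R) : a <= b ->
  (forall t, a <= t <= b -> exists i, lo i < t < hi i) ->
  exists L : list nat, forall t, a <= t <= b -> exists i, In i L /\ lo i < t < hi i.
Proof.
  intros Hab Hc.
  set (W := fun i x => lo i < x < hi i).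
  assert (cf : forall y, (exists t, (exists i, y = INR i /\ W i t)) -> (exists i : nat, y = INR i)).
  { intros y (t&i&E&_). eauto. }
  set (fam := mkfamily (fun y => exists i : nat, y = INR i) (fun y t => exists i, y = INR i /\ W i t) cf).
  destruct (compact_P3 a b fam) as (D&Hcov&[l Hl]).
  { split.
    - intros t Ht. destruct (Hc t Ht) as [i Hi]. exists (INR i). exists i. split; auto.
    - intros y t (i&E&Ht). unfold W in Ht.
      assert (Hd0 : 0 < Rmin (t - lo i) (hi i - t)) by (apply Rmin_pos; lra).
      exists (mkposreal _ Hd0). intros z Hz. unfold disc in Hz. simpl in Hz.
      exists i. split; auto. unfold W. apply Rabs_def2 in Hz.
      pose proof (Rmin_l (t - lo i) (hi i - t)). pose proof (Rmin_r (t - lo i) (hi i - t)). lra. }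
  exists (map (fun y => Z.to_nat (Int_part y)) l).
  intros t Ht. destruct (Hcov t Ht) as (y&(i&E&Hw)&HD). exists i. split; auto.
  apply in_map_iff. exists y. split.
  - subst. rewrite Int_part_INR. apply Nat2Z.id.
  - apply Hl. simpl. split; auto. exists i; auto.
Qed.

Lemma list_nat_bound (L : list nat) : exists N, forall i, In i L -> (i < N)%nat.
Proof.
  induction L as [|a L [N HN]]. exists 0%nat. intros i [].
  exists (S (Nat.max a N)). intros i [<-|Hi]. lia. specialize (HN i Hi). lia.
Qed.

Lemma diameter_cover_sum_ge (V : nat -> R -> Prop) (e : nat -> R) (a b : R) : a <= b ->
  (forall i, 0 < e i) -> (forall i u v, V i u -> V i v -> Rabs (u - v) <= e i) ->
  (forall t, a <= t <= b -> exists i, V i t) ->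
  exists N, (b - a) / 4 <= sum_f_R0 e N.
Proof.
  intros Hab He Hd Hc.
  assert (Hv : forall i, exists v, forall u, V i u -> Rabs (u - v) <= e i).
  { intro i. destruct (classic (exists u, V i u)) as [[u Hu]|H].
    - exists u. intros w Hw. auto.
    - exists 0. intros u Hu. exfalso. eauto. }
  destruct (choice _ Hv) as [v Hv'].
  set (lo := fun i => v i - 2 * e i). set (hi := fun i => v i + 2 * e i).
  assert (Hlh : forall i, lo i < hi i) by (intro i; unfold lo, hi; specialize (He i); lra).
  destruct (interval_finite_subcover lo hi a b Hab) as [L HL].
  { intros t Ht. destruct (Hc t Ht) as [i Hi]. exists i. specialize (Hv' i t Hi). specialize (He i).
    unfold lo, hi. unfold Rabs in Hv'; destruct (Rcase_abs (t - v i)); lra. }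
  assert (H1 : b - a <= lsum (map (fun i => hi i - lo i) (nodup Nat.eq_dec L))).
  { apply interval_cover_length; auto. intros x Hx. destruct (HL x Hx) as (i&Hi&Hi2).
    exists i. split; auto. apply nodup_In. auto. }
  destruct (list_nat_bound L) as [N HN].
  exists N. rewrite <- lsum_map_seq.
  assert (H2 : lsum (map (fun i => hi i - lo i) (nodup Nat.eq_dec L))
               <= lsum (map (fun i => hi i - lo i) (seq 0 (S N)))).
  { apply lsum_NoDup_le_seq; [intro i; specialize (Hlh i); lra|apply NoDup_nodup|].
    intros i Hi. apply nodup_In in Hi. specialize (HN i Hi). lia. }
  assert (Hw : forall l, lsum (map (fun i => hi i - lo i) l) = 4 * lsum (map e l)).
  { intro l. rewrite <- lsum_map_mult. apply lsum_map_ext. intros. unfold hi, lo. ring. }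
  rewrite Hw in H1. rewrite Hw, (Hw (seq 0 (S N))) in H2. lra.
Qed.

Definition digits_ge2 (a : nat -> Z) : Prop := forall k, (2 <= a k)%Z.

Definition seq_shift (a : nat -> Z) : nat -> Z := fun k => a (S k).

(** [cf_finite a n] is the finite continued fraction [0; a_0, ..., a_(n-1)]. *)
Fixpoint cf_finite (a : nat -> Z) (n : nat) : R :=
  match n with O => 0 | S n' => / (IZR (a O) + cf_finite (seq_shift a) n') end.

Definition cf_value (a : nat -> Z) : R := epsilon (inhabits 0) (fun l => Un_cv (cf_finite a) l).

Lemma digits_ge2_shift (a : nat -> Z) : digits_ge2 a -> digits_ge2 (seq_shift a).
Proof. intros H k. apply H. Qed.

Lemma digits_ge2_head (a : nat -> Z) : digits_ge2 a -> 2 <= IZR (a O).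
Proof. intros H. apply IZR_le. apply H. Qed.

Lemma inv_shift_range (c u : R) : 2 <= c -> 0 <= u -> 0 < / (c + u) <= 1/2.
Proof.
  intros. split. apply Rinv_0_lt_compat; lra.
  replace (1/2) with (/2) by field. apply Rinv_le_contravar; lra.
Qed.

Lemma inv_shift_contract (c u w : R) : 2 <= c -> 0 <= u -> 0 <= w ->
  Rabs (/ (c + u) - / (c + w)) <= Rabs (u - w) / 4.
Proof.
  intros Hc Hu Hw.
  replace (/ (c + u) - / (c + w)) with ((w - u) / ((c + u) * (c + w))) by (field; lra).
  unfold Rdiv. rewrite Rabs_mult, Rabs_inv by nra. rewrite (Rabs_right ((c+u)*(c+w))) by nra.
  rewrite <- Rabs_Ropp. replace (- (w - u)) with (u - w) by ring.
  pose proof (Rabs_pos (u - w)). apply Rmult_le_compat_l; auto.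
  apply Rinv_le_contravar; nra.
Qed.

Lemma cf_finite_range (n : nat) (a : nat -> Z) : digits_ge2 a -> 0 <= cf_finite a n <= 1/2.
Proof.
  revert a. induction n; intros a Ha; simpl; [lra|].
  destruct (IHn (seq_shift a) (digits_ge2_shift a Ha)).
  pose proof (inv_shift_range _ _ (digits_ge2_head a Ha) H). lra.
Qed.

Lemma cf_finite_close (n m : nat) (a : nat -> Z) : digits_ge2 a ->
  Rabs (cf_finite a n - cf_finite a (n + m)) <= (/4) ^ n / 2.
Proof.
  revert a. induction n; intros a Ha.
  - simpl. destruct (cf_finite_range m a Ha). rewrite Rabs_left1 by lra. lra.
  - simpl. eapply Rle_trans.
    + apply inv_shift_contract; [apply digits_ge2_head; auto|apply cf_finite_range..];
        apply digits_ge2_shift; auto.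
    + specialize (IHn (seq_shift a) (digits_ge2_shift a Ha)). lra.
Qed.

Lemma cf_finite_Cauchy (a : nat -> Z) : digits_ge2 a -> Cauchy_crit (cf_finite a).
Proof.
  intros Ha eps He.
  destruct (geom_eventually_le (/4) (eps / 2)) as [N HN]; [lra|lra|].
  assert (Hsmall : forall n, (N <= n)%nat -> (/4) ^ n < eps).
  { intros n Hn. specialize (HN N (le_n _)).
    replace n with (N + (n - N))%nat by lia. rewrite pow_add.
    assert (0 < (/4) ^ N) by (apply pow_lt; lra).
    assert ((/4) ^ (n - N) <= 1) by (rewrite <- (pow1 (n - N)); apply pow_incr; lra).
    assert (0 <= (/4) ^ (n - N)) by (apply pow_le; lra). nra. }
  exists N. intros n m Hn Hm. unfold R_dist.
  destruct (Nat.le_gt_cases n m).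
  - replace m with (n + (m - n))%nat by lia. eapply Rle_lt_trans; [apply cf_finite_close; auto|].
    pose proof (Hsmall n Hn). assert (0 < (/4)^n) by (apply pow_lt; lra). lra.
  - rewrite Rabs_minus_sym. replace n with (m + (n - m))%nat by lia.
    eapply Rle_lt_trans; [apply cf_finite_close; auto|].
    pose proof (Hsmall m Hm). assert (0 < (/4)^m) by (apply pow_lt; lra). lra.
Qed.

Section PrescribedDigits.

Variable a : nat -> Z.
Hypothesis a_ge2 : digits_ge2 a.

Lemma cf_value_cv : Un_cv (cf_finite a) (cf_value a).
Proof.
  unfold cf_value. apply epsilon_spec.
  destruct (R_complete _ (cf_finite_Cauchy a a_ge2)) as [l Hl]. eauto.
Qed.

Lemma cf_value_close (n : nat) : Rabs (cf_finite a n - cf_value a) <= (/4) ^ n / 2.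
Proof.
  destruct (Rle_or_lt (Rabs (cf_finite a n - cf_value a)) ((/4) ^ n / 2)) as [H|H]; auto. exfalso.
  destruct (cf_value_cv (Rabs (cf_finite a n - cf_value a) - (/4) ^ n / 2)) as [N HN]; [lra|].
  specialize (HN (n + N)%nat ltac:(lia)). unfold R_dist in HN.
  pose proof (cf_finite_close n N a a_ge2).
  pose proof (Rabs_triang (cf_finite a n - cf_finite a (n + N)) (cf_finite a (n + N) - cf_value a)).
  replace (cf_finite a n - cf_finite a (n + N) + (cf_finite a (n + N) - cf_value a))
    with (cf_finite a n - cf_value a) in H1 by ring. lra.
Qed.

Lemma cf_value_range : 0 <= cf_value a <= 1/2.
Proof.
  assert (Hq : 0 < /4 < 1) by lra.
  split; [assert (- cf_value a <= 0); [|lra]|assert (cf_value a - 1/2 <= 0); [|lra]];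
    apply (le_0_of_le_geom (/4)); auto; intro n;
    pose proof (cf_value_close n); pose proof (cf_finite_range n a a_ge2);
    assert (0 < (/4)^n) by (apply pow_lt; lra);
    unfold Rabs in H; destruct Rcase_abs in H; lra.
Qed.

End PrescribedDigits.

Lemma cf_value_eq (a : nat -> Z) : digits_ge2 a -> cf_value a = / (IZR (a O) + cf_value (seq_shift a)).
Proof.
  intros Ha. apply Rminus_diag_uniq.
  set (z := cf_value a - / (IZR (a O) + cf_value (seq_shift a))).
  assert (Rabs z <= 0); [|unfold Rabs in H; destruct (Rcase_abs z); lra].
  apply (le_0_of_le_geom (/4)); [lra|]. intro n.
  pose proof (cf_value_close a Ha (S n)) as H1. simpl in H1.
  pose proof (cf_value_close (seq_shift a) (digits_ge2_shift a Ha) n) as H2.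
  pose proof (inv_shift_contract (IZR (a O)) (cf_finite (seq_shift a) n) (cf_value (seq_shift a))
     (digits_ge2_head a Ha) (proj1 (cf_finite_range n _ (digits_ge2_shift a Ha)))
     (proj1 (cf_value_range _ (digits_ge2_shift a Ha)))) as H3.
  set (w := / (IZR (a O) + cf_finite (seq_shift a) n)) in *.
  pose proof (Rabs_triang (cf_value a - w) (w - / (IZR (a O) + cf_value (seq_shift a)))).
  replace (cf_value a - w + (w - / (IZR (a O) + cf_value (seq_shift a)))) with z in H by (unfold z; ring).
  rewrite Rabs_minus_sym in H1.
  assert (0 < (/4)^n) by (apply pow_lt; lra). lra.
Qed.

Lemma cf_value_pos (a : nat -> Z) : digits_ge2 a -> 0 < cf_value a <= 1/2.
Proof.
  intros Ha. rewrite cf_value_eq by auto. apply inv_shift_range; [apply digits_ge2_head; auto|].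
  apply cf_value_range, digits_ge2_shift; auto.
Qed.

Lemma gauss_cf_value (a : nat -> Z) : digits_ge2 a ->
  gauss (cf_value a) = cf_value (seq_shift a) /\ Int_part (/ cf_value a) = a O.
Proof.
  intros Ha. pose proof (cf_value_pos (seq_shift a) (digits_ge2_shift a Ha)).
  pose proof (digits_ge2_head a Ha).
  assert (E : / cf_value a = IZR (a O) + cf_value (seq_shift a)) by (rewrite cf_value_eq, Rinv_inv; auto).
  assert (Ei : Int_part (/ cf_value a) = a O) by (rewrite E; apply Int_part_IZR_plus; lra).
  split; auto. unfold gauss. rewrite Ei, E. ring.
Qed.

Definition seq_shiftn (k : nat) (a : nat -> Z) : nat -> Z := Nat.iter k seq_shift a.

Lemma seq_shiftn_val (k : nat) (a : nat -> Z) (i : nat) : seq_shiftn k a i = a (k + i)%nat.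
Proof.
  revert i. induction k; intro i; simpl; auto. unfold seq_shiftn in *. simpl. unfold seq_shift at 1.
  rewrite IHk. f_equal. lia.
Qed.

Lemma digits_ge2_shiftn (k : nat) (a : nat -> Z) : digits_ge2 a -> digits_ge2 (seq_shiftn k a).
Proof. intros H i. rewrite seq_shiftn_val. apply H. Qed.

Lemma cf_tail_cf_value (a : nat -> Z) (k : nat) : digits_ge2 a -> cf_tail k (cf_value a) = cf_value (seq_shiftn k a).
Proof.
  intros Ha. induction k; [reflexivity|]. rewrite cf_tail_S, IHk.
  apply (gauss_cf_value (seq_shiftn k a) (digits_ge2_shiftn k a Ha)).
Qed.

Lemma cf_digitZ_cf_value (a : nat -> Z) (k : nat) : digits_ge2 a -> cf_digitZ k (cf_value a) = a k.
Proof.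
  intros Ha. unfold cf_digitZ. rewrite cf_tail_cf_value by auto.
  destruct (gauss_cf_value (seq_shiftn k a) (digits_ge2_shiftn k a Ha)) as [_ ->].
  rewrite seq_shiftn_val. f_equal. lia.
Qed.

(** A rational in (0,1) has a Gauss orbit whose denominators strictly decrease until it leaves (0,1). *)
Lemma irrational_of_cf_tail_range (x : R) : (forall k, 0 < cf_tail k x < 1) -> irrational x.
Proof.
  intros H p q Hq E.
  assert (H0 : exists u v : Z, (0 < v)%Z /\ x = IZR u / IZR v).
  { destruct (Z_lt_le_dec 0 q). exists p, q. auto.
    exists (-p)%Z, (-q)%Z. split. lia. rewrite E, !opp_IZR. field. apply not_0_IZR. auto. }
  destruct H0 as (u0&v0&Hv0&E0).
  assert (Cl : forall k, exists u v : Z, (0 < v)%Z /\ (v + Z.of_nat k <= v0)%Z /\ cf_tail k x = IZR u / IZR v).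
  { induction k.
    - exists u0, v0. split; auto. split. lia. auto.
    - destruct IHk as (u&v&Hv&Hvk&Et). pose proof (H k) as [T1 T2]. rewrite Et in T1, T2.
      assert (Hvr : 0 < IZR v) by (apply IZR_lt; auto).
      assert (Hu : (0 < u)%Z).
      { apply lt_IZR. unfold Rdiv in T1. apply Rmult_lt_reg_r with (/ IZR v).
        apply Rinv_0_lt_compat; auto. lra. }
      assert (Huv : (u < v)%Z).
      { apply lt_IZR. apply Rmult_lt_reg_r with (/ IZR v).
        apply Rinv_0_lt_compat; auto. rewrite Rinv_r by lra. auto. }
      assert (Hur : 0 < IZR u) by (apply IZR_lt; auto).
      exists (v - Int_part (IZR v / IZR u) * u)%Z, u. split; auto. split. rewrite Nat2Z.inj_succ. lia.
      rewrite cf_tail_S, Et. unfold gauss. rewrite minus_IZR, mult_IZR.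
      replace (/ (IZR u / IZR v)) with (IZR v / IZR u) by (field; lra). field. lra. }
  destruct (Cl (Z.to_nat v0)) as (u&v&Hv&Hvk&_). rewrite Z2Nat.id in Hvk by lia. lia.
Qed.

Lemma cf_value_irrational (a : nat -> Z) : digits_ge2 a -> 0 < cf_value a < 1 /\ irrational (cf_value a).
Proof.
  intros Ha. pose proof (cf_value_pos a Ha). split; [lra|]. apply irrational_of_cf_tail_range. intro k.
  rewrite cf_tail_cf_value by auto. pose proof (cf_value_pos _ (digits_ge2_shiftn k a Ha)). lra.
Qed.

Lemma cf_value_gap_head_lt (a b : nat -> Z) : digits_ge2 a -> digits_ge2 b -> (a O < b O)%Z ->
  / (2 * ((IZR (a O) + 1) * (IZR (b O) + 1))) <= Rabs (cf_value a - cf_value b).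
Proof.
  intros Ha Hb Hab.
  rewrite (cf_value_eq a Ha), (cf_value_eq b Hb).
  pose proof (cf_value_pos _ (digits_ge2_shift a Ha)) as [U1 U2].
  pose proof (cf_value_pos _ (digits_ge2_shift b Hb)) as [V1 V2].
  set (u := cf_value (seq_shift a)) in *. set (v := cf_value (seq_shift b)) in *.
  pose proof (digits_ge2_head a Ha). pose proof (digits_ge2_head b Hb).
  assert (Hab' : IZR (a O) + 1 <= IZR (b O)) by (rewrite <- plus_IZR; apply IZR_le; lia).
  set (ca := IZR (a O)) in *. set (cb := IZR (b O)) in *.
  replace (/ (ca + u) - / (cb + v)) with ((cb + v - ca - u) / ((ca + u) * (cb + v))) by (field; lra).
  assert (Hd : 0 < (ca + u) * (cb + v)) by nra.
  rewrite Rabs_right.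
  2:{ apply Rle_ge. unfold Rdiv. apply Rmult_le_pos; [lra|]. left; apply Rinv_0_lt_compat; auto. }
  apply Rle_trans with ((1/2) / ((ca + u) * (cb + v))).
  - unfold Rdiv. rewrite Rmult_1_l.
    replace (/ (2 * ((ca + 1) * (cb + 1)))) with (/2 * / ((ca + 1) * (cb + 1))) by (field; lra).
    apply Rmult_le_compat_l; [lra|]. apply Rinv_le_contravar; auto. nra.
  - unfold Rdiv. apply Rmult_le_compat_r. left; apply Rinv_0_lt_compat; auto. lra.
Qed.

Lemma cf_value_gap_head (a b : nat -> Z) : digits_ge2 a -> digits_ge2 b -> a O <> b O ->
  / (2 * ((IZR (a O) + 1) * (IZR (b O) + 1))) <= Rabs (cf_value a - cf_value b).
Proof.
  intros Ha Hb Hab. destruct (Z_lt_le_dec (a O) (b O)).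
  - apply cf_value_gap_head_lt; auto.
  - rewrite Rabs_minus_sym, (Rmult_comm (IZR (a O) + 1)). apply cf_value_gap_head_lt; auto. lia.
Qed.

Lemma cf_value_dist_shift (a b : nat -> Z) : digits_ge2 a -> digits_ge2 b -> a O = b O ->
  Rabs (cf_value (seq_shift a) - cf_value (seq_shift b)) / (IZR (a O) + 1) ^ 2
  <= Rabs (cf_value a - cf_value b).
Proof.
  intros Ha Hb Hab.
  rewrite (cf_value_eq a Ha), (cf_value_eq b Hb), <- Hab.
  pose proof (cf_value_pos _ (digits_ge2_shift a Ha)) as [U1 U2].
  pose proof (cf_value_pos _ (digits_ge2_shift b Hb)) as [V1 V2].
  set (u := cf_value (seq_shift a)) in *. set (v := cf_value (seq_shift b)) in *.
  pose proof (digits_ge2_head a Ha). set (c := IZR (a O)) in *.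
  replace (/ (c + u) - / (c + v)) with ((v - u) / ((c + u) * (c + v))) by (field; lra).
  assert (Hd : 0 < (c + u) * (c + v)) by nra.
  unfold Rdiv. rewrite Rabs_mult, Rabs_inv, (Rabs_right ((c + u) * (c + v))) by lra.
  rewrite Rabs_minus_sym. apply Rmult_le_compat_l. apply Rabs_pos.
  apply Rinv_le_contravar; auto. simpl. nra.
Qed.

Fixpoint sq_prod (A : nat -> Z) (n : nat) : R :=
  match n with O => 1 | S n' => (IZR (A O) + 1) ^ 2 * sq_prod (seq_shift A) n' end.

Lemma sq_prod_ge1 (A : nat -> Z) (n : nat) : (forall i, (0 <= A i)%Z) -> 1 <= sq_prod A n.
Proof.
  revert A. induction n; intros A H; simpl; [lra|].
  assert (0 <= IZR (A O)) by (apply IZR_le; auto).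
  assert (1 <= sq_prod (seq_shift A) n) by (apply IHn; intro; apply H). nra.
Qed.

Lemma sq_prod_S (A : nat -> Z) (n : nat) : sq_prod A (S n) = sq_prod A n * (IZR (A n) + 1) ^ 2.
Proof.
  revert A. induction n; intros A; simpl. ring.
  simpl in IHn. rewrite IHn. unfold seq_shift. ring.
Qed.

Lemma cf_value_gap (n : nat) (a b A : nat -> Z) : digits_ge2 a -> digits_ge2 b ->
  (forall i, (a i <= A i)%Z) -> (forall i, (b i <= A i)%Z) ->
  (forall i, (i < n)%nat -> a i = b i) -> a n <> b n ->
  / (2 * sq_prod A (S n)) <= Rabs (cf_value a - cf_value b).
Proof.
  revert a b A. induction n; intros a b A Ha Hb HA HB Heq Hne.
  - eapply Rle_trans; [|apply cf_value_gap_head; auto]. simpl.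
    pose proof (digits_ge2_head a Ha). pose proof (digits_ge2_head b Hb).
    assert (IZR (a O) <= IZR (A O)) by (apply IZR_le; auto).
    assert (IZR (b O) <= IZR (A O)) by (apply IZR_le; auto).
    apply Rinv_le_contravar; nra.
  - assert (H0 : a O = b O) by (apply Heq; lia).
    eapply Rle_trans; [|apply cf_value_dist_shift; auto].
    specialize (IHn (seq_shift a) (seq_shift b) (seq_shift A) (digits_ge2_shift a Ha) (digits_ge2_shift b Hb)
      (fun i => HA (S i)) (fun i => HB (S i)) (fun i Hi => Heq (S i) ltac:(lia)) Hne).
    pose proof (digits_ge2_head a Ha). assert (IZR (a O) <= IZR (A O)) by (apply IZR_le; auto).
    assert (HP : 1 <= sq_prod (seq_shift A) (S n)).
    { apply sq_prod_ge1. intro i. unfold seq_shift. specialize (HA (S i)). specialize (Ha (S i)). lia. }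
    change (sq_prod A (S (S n))) with ((IZR (A O) + 1) ^ 2 * sq_prod (seq_shift A) (S n)).
    apply Rle_trans with (/ (2 * sq_prod (seq_shift A) (S n)) / (IZR (a O) + 1) ^ 2).
    + unfold Rdiv.
      replace (/ (2 * ((IZR (A O) + 1) ^ 2 * sq_prod (seq_shift A) (S n)))) with
        (/ (2 * sq_prod (seq_shift A) (S n)) * / (IZR (A O) + 1) ^ 2) by (field; split; nra).
      apply Rmult_le_compat_l; [left; apply Rinv_0_lt_compat; lra|].
      apply Rinv_le_contravar; [nra|]. apply pow_incr. lra.
    + unfold Rdiv. apply Rmult_le_compat_r; auto. left. apply Rinv_0_lt_compat. nra.
Qed.

(** Mixed-radix expansion of [t] in [[0, 1)] with bases [m 0, m 1, ...]:
    [radix_digit m t n] is the [n]-th digit and [radix_rem m t n] the remainder after [n] digits. *)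
Fixpoint radix_rem (m : nat -> Z) (t : R) (n : nat) : R :=
  match n with O => t | S n' => frac_part (radix_rem m t n' * IZR (m n')) end.

Definition radix_digit (m : nat -> Z) (t : R) (n : nat) : Z := Int_part (radix_rem m t n * IZR (m n)).

Fixpoint radix_prod (m : nat -> Z) (n : nat) : R :=
  match n with O => 1 | S n' => radix_prod m n' * IZR (m n') end.

Lemma radix_rem_range (m : nat -> Z) (t : R) (n : nat) : 0 <= t < 1 -> 0 <= radix_rem m t n < 1.
Proof. intros H. destruct n; simpl; auto. destruct (base_fp (radix_rem m t n * IZR (m n))). lra. Qed.

Section MixedRadix.

Variable m : nat -> Z.
Hypothesis m_ge2 : forall i, (2 <= m i)%Z.

Lemma radix_digit_range (t : R) (n : nat) : 0 <= t < 1 -> (0 <= radix_digit m t n <= m n - 1)%Z.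
Proof.
  intros Ht. unfold radix_digit. pose proof (radix_rem_range m t n Ht).
  assert (2 <= IZR (m n)) by (apply IZR_le; auto).
  destruct (base_Int_part (radix_rem m t n * IZR (m n))) as [B1 B2]. split.
  - assert (-1 < Int_part (radix_rem m t n * IZR (m n)))%Z; [|lia]. apply lt_IZR. simpl. nra.
  - assert (Int_part (radix_rem m t n * IZR (m n)) < m n)%Z; [|lia]. apply lt_IZR. nra.
Qed.

Lemma radix_prod_ge_pow2 (n : nat) : 2 ^ n <= radix_prod m n.
Proof.
  induction n; simpl; [lra|]. assert (2 <= IZR (m n)) by (apply IZR_le; auto).
  assert (0 < 2 ^ n) by (apply pow_lt; lra). nra.
Qed.

Lemma radix_prod_pos (n : nat) : 0 < radix_prod m n.
Proof. pose proof (radix_prod_ge_pow2 n). assert (0 < 2 ^ n) by (apply pow_lt; lra). lra. Qed.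

Lemma radix_dist_le (t t' : R) (n : nat) : 0 <= t < 1 -> 0 <= t' < 1 ->
  (forall i, (i < n)%nat -> radix_digit m t i = radix_digit m t' i) ->
  Rabs (t - t') <= / radix_prod m n.
Proof.
  intros Ht Ht' Heq.
  assert (E : t - t' = (radix_rem m t n - radix_rem m t' n) / radix_prod m n).
  { clear Ht Ht'. induction n; [simpl; field|].
    rewrite IHn by (intros; apply Heq; lia). simpl. unfold frac_part.
    fold (radix_digit m t n) (radix_digit m t' n). rewrite (Heq n) by lia.
    assert (2 <= IZR (m n)) by (apply IZR_le; auto). pose proof (radix_prod_pos n).
    field. lra. }
  rewrite E. pose proof (radix_rem_range m t n Ht). pose proof (radix_rem_range m t' n Ht').
  pose proof (radix_prod_pos n).
  unfold Rdiv. rewrite Rabs_mult, Rabs_inv, (Rabs_right (radix_prod m n)) by lra.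
  assert (Rabs (radix_rem m t n - radix_rem m t' n) <= 1) by (unfold Rabs; destruct Rcase_abs; lra).
  rewrite <- (Rmult_1_l (/ radix_prod m n)) at 2. apply Rmult_le_compat_r; auto.
  left; apply Rinv_0_lt_compat; lra.
Qed.

Lemma radix_digit_injective (t t' : R) : 0 <= t < 1 -> 0 <= t' < 1 ->
  (forall i, radix_digit m t i = radix_digit m t' i) -> t = t'.
Proof.
  intros Ht Ht' Heq. apply Rminus_diag_uniq.
  assert (Rabs (t - t') <= 0); [|unfold Rabs in H; destruct Rcase_abs in H; lra].
  apply (le_0_of_le_geom (/2)); [lra|]. intro n.
  eapply Rle_trans; [apply (radix_dist_le t t' n); auto|].
  rewrite pow_inv. apply Rinv_le_contravar; [apply pow_lt; lra|apply radix_prod_ge_pow2].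
Qed.

Definition coded_point (A : nat -> Z) (t : R) : R := cf_value (fun i => A i - radix_digit m t i)%Z.

Variables (A : nat -> Z) (s rho : R).
Hypothesis A_ge : forall i, (2 <= A i - m i + 1)%Z.
Hypothesis s_pos : 0 < s.
Hypothesis rho_pos : 0 < rho.
Hypothesis rho_le : forall n, rho <= radix_prod m n * Rpower (/ (2 * sq_prod A (S n))) s.

Lemma coded_digits_ge2 (t : R) : 0 <= t < 1 -> digits_ge2 (fun i => A i - radix_digit m t i)%Z.
Proof. intros Ht i. pose proof (radix_digit_range t i Ht). specialize (A_ge i). lia. Qed.

Lemma coded_point_gap (t t' : R) : 0 <= t < 1 -> 0 <= t' < 1 -> t <> t' ->
  exists n, Rabs (t - t') <= / radix_prod m n /\
            / (2 * sq_prod A (S n)) <= Rabs (coded_point A t - coded_point A t').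
Proof.
  intros Ht Ht' Hne.
  destruct (dec_inh_nat_subset_has_unique_least_element
              (fun n => radix_digit m t n <> radix_digit m t' n)) as (n&(Hn1&Hn2)&_).
  { intro n. destruct (Z.eq_dec (radix_digit m t n) (radix_digit m t' n)); [right|left]; auto. }
  { apply NNPP. intro Hall. apply Hne, radix_digit_injective; auto. intro i.
    destruct (Z.eq_dec (radix_digit m t i) (radix_digit m t' i)); eauto. exfalso; eauto. }
  assert (Hbefore : forall i, (i < n)%nat -> radix_digit m t i = radix_digit m t' i).
  { intros i Hi. destruct (Z.eq_dec (radix_digit m t i) (radix_digit m t' i)); auto.
    specialize (Hn2 i n0). lia. }
  assert (Hbound : forall u, 0 <= u < 1 -> forall i, (A i - radix_digit m u i <= A i)%Z).
  { intros u Hu i. pose proof (radix_digit_range u i Hu). lia. }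
  exists n. split; [apply radix_dist_le; auto|].
  apply cf_value_gap; auto using coded_digits_ge2.
  - intros i Hi. simpl. rewrite Hbefore; auto.
  - simpl. lia.
Qed.

Lemma sq_prod_window_pos (n : nat) : 0 < / (2 * sq_prod A n).
Proof.
  assert (HA0 : forall i, (0 <= A i)%Z) by (intro i; specialize (A_ge i); specialize (m_ge2 i); lia).
  pose proof (sq_prod_ge1 A n HA0). apply Rinv_0_lt_compat. lra.
Qed.

Lemma coded_point_injective (t t' : R) : 0 <= t < 1 -> 0 <= t' < 1 -> t <> t' ->
  coded_point A t <> coded_point A t'.
Proof.
  intros Ht Ht' Hne E. destruct (coded_point_gap t t' Ht Ht' Hne) as (n&_&Hgap).
  rewrite E, Rminus_diag, Rabs_R0 in Hgap. pose proof (sq_prod_window_pos (S n)). lra.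
Qed.

Lemma coded_point_holder (t t' : R) : 0 <= t < 1 -> 0 <= t' < 1 -> t <> t' ->
  Rabs (t - t') <= / rho * Rpower (Rabs (coded_point A t - coded_point A t')) s.
Proof.
  intros Ht Ht' Hne. destruct (coded_point_gap t t' Ht Ht' Hne) as (n&Hdist&Hgap).
  pose proof (sq_prod_window_pos (S n)). pose proof (radix_prod_pos n).
  eapply Rle_trans; [apply Hdist|].
  apply Rle_trans with (/ rho * Rpower (/ (2 * sq_prod A (S n))) s).
  - specialize (rho_le n).
    apply Rmult_le_reg_l with (r := rho * radix_prod m n); [nra|].
    replace (rho * radix_prod m n * / radix_prod m n) with rho by (field; lra).
    replace (rho * radix_prod m n * (/ rho * Rpower (/ (2 * sq_prod A (S n))) s))
      with (radix_prod m n * Rpower (/ (2 * sq_prod A (S n))) s) by (field; lra).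
    auto.
  - apply Rmult_le_compat_l; [left; apply Rinv_0_lt_compat; auto|].
    apply Rle_Rpower_l; [lra|]. split; auto.
Qed.

End MixedRadix.

Definition eventually_R (P : R -> Prop) : Prop := exists R0, forall x, R0 <= x -> P x.

Lemma eventually_R_and (P Q : R -> Prop) : eventually_R P -> eventually_R Q -> eventually_R (fun x => P x /\ Q x).
Proof.
  intros [R1 H1] [R2 H2]. exists (Rmax R1 R2). intros x Hx. split.
  - apply H1. eapply Rle_trans; [apply Rmax_l|eauto].
  - apply H2. eapply Rle_trans; [apply Rmax_r|eauto].
Qed.

Lemma eventually_R_linear (c k : R) : 0 < k -> eventually_R (fun x => c <= k * x).
Proof.
  intros Hk. exists (Rabs c / k). intros x Hx.
  apply Rmult_le_compat_l with (r := k) in Hx; [|lra].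
  replace (k * (Rabs c / k)) with (Rabs c) in Hx by (field; lra). pose proof (Rle_abs c). lra.
Qed.

Lemma eventually_R_exp_ge (c k : R) : 0 < k -> eventually_R (fun x => c <= exp (k * x)).
Proof.
  intros Hk. destruct (eventually_R_linear c k Hk) as [R0 H]. exists R0. intros x Hx.
  pose proof (exp_ineq1_le (k * x)). specialize (H x Hx). lra.
Qed.

Lemma eventually_R_exp_le (c k : R) : 0 < c -> 0 < k -> eventually_R (fun x => exp (- k * x) <= c).
Proof.
  intros Hc Hk. destruct (eventually_R_linear (- ln c) k Hk) as [R0 H]. exists R0. intros x Hx.
  rewrite <- (exp_ln c) by auto. apply exp_le. specialize (H x Hx). lra.
Qed.

(** For [s < 1/2] and [tau = s + 1/2]: the window [exp (tau sqrt n)] is at least 2, fits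
    below [alpha exp (sqrt n)], and beats [(A_(n+1) + 1)^(2 s)]. *)
Lemma window_facts_eventually (alpha s : R) : 0 < alpha -> 0 < s < 1/2 -> eventually_R (fun sq =>
  2 <= exp ((s + 1/2) * sq) /\ 3 <= alpha * exp sq - exp ((s + 1/2) * sq) /\
  exp (2 * s * (ln (alpha + 1) + sq + 1)) <= exp ((s + 1/2) * sq) - 1).
Proof.
  intros Ha Hs. set (tau := s + 1/2).
  assert (E1 : forall sq, exp (tau * sq) = exp sq * exp (- (1 - tau) * sq))
    by (intro; rewrite <- exp_plus; f_equal; ring).
  assert (Hln2 : 0 < ln 2) by (rewrite <- ln_1; apply ln_increasing; lra).
  destruct (eventually_R_exp_ge 2 tau ltac:(unfold tau; lra)) as [R1 H1].
  apply eventually_R_and; [exists R1; auto|]. apply eventually_R_and.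
  - destruct (eventually_R_and _ _ (eventually_R_exp_le (alpha / 2) (1 - tau) ltac:(lra) ltac:(unfold tau; lra))
      (eventually_R_exp_ge (6 / alpha) 1 ltac:(lra))) as [R0 H].
    exists R0. intros sq Hsq. destruct (H sq Hsq) as [Hlo Hhi]. rewrite Rmult_1_l in Hhi.
    rewrite E1. assert (exp sq * (alpha / 2) >= 3).
    { apply Rle_ge. apply Rle_trans with (6 / alpha * (alpha / 2)); [right; field; lra|].
      apply Rmult_le_compat_r; lra. }
    pose proof (exp_pos sq). nra.
  - destruct (eventually_R_linear (2 * s * (ln (alpha + 1) + 1) + ln 2) (1/2 - s) ltac:(lra)) as [R0 H].
    exists (Rmax R0 R1). intros sq Hsq.
    specialize (H sq (Rle_trans _ _ _ (Rmax_l _ _) Hsq)). specialize (H1 sq (Rle_trans _ _ _ (Rmax_r _ _) Hsq)).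
    apply Rle_trans with (exp (tau * sq - ln 2)).
    + apply exp_le. unfold tau. nra.
    + rewrite Rminus_def, exp_plus, exp_Ropp, exp_ln by lra. fold tau in H1. lra.
Qed.

Definition window_top (alpha : R) (n0 i : nat) : Z :=
  if Nat.ltb i n0 then 3%Z else Int_part (alpha * exp (sqrt (INR (S i)))).

Definition window_size (tau : R) (n0 i : nat) : Z :=
  if Nat.ltb i n0 then 2%Z else Int_part (exp (tau * sqrt (INR (S i)))).

Section DigitWindows.

Variables (alpha tau : R) (n0 : nat).
Hypothesis alpha_pos : 0 < alpha.
Hypothesis n0_large : forall i, (n0 <= i)%nat ->
  2 <= exp (tau * sqrt (INR (S i))) /\ 3 <= alpha * exp (sqrt (INR (S i))) - exp (tau * sqrt (INR (S i))).

Let A := window_top alpha n0.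
Let m := window_size tau n0.

Lemma window_spec (i : nat) : (n0 <= i)%nat ->
  IZR (A i) <= alpha * exp (sqrt (INR (S i))) /\ alpha * exp (sqrt (INR (S i))) - 1 < IZR (A i) /\
  IZR (m i) <= exp (tau * sqrt (INR (S i))) /\ exp (tau * sqrt (INR (S i))) - 1 < IZR (m i).
Proof.
  intros Hi. unfold A, m, window_top, window_size. destruct (Nat.ltb_spec i n0); [lia|].
  destruct (base_Int_part (alpha * exp (sqrt (INR (S i))))).
  destruct (base_Int_part (exp (tau * sqrt (INR (S i))))). lra.
Qed.

Lemma window_size_ge2 (i : nat) : (2 <= m i)%Z.
Proof.
  destruct (Nat.lt_ge_cases i n0).
  - unfold m, window_size. destruct (Nat.ltb_spec i n0); lia.
  - destruct (n0_large i H) as [B1 _]. destruct (window_spec i H) as (_&_&_&L4).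
    assert (1 < IZR (m i)) by lra. apply lt_IZR in H0. lia.
Qed.

Lemma window_bottom_ge2 (i : nat) : (2 <= A i - m i + 1)%Z.
Proof.
  destruct (Nat.lt_ge_cases i n0).
  - unfold A, m, window_top, window_size. destruct (Nat.ltb_spec i n0); lia.
  - destruct (n0_large i H) as [_ B2]. destruct (window_spec i H) as (L1&L2&L3&L4).
    assert (1 < IZR (A i - m i + 1)) by (rewrite plus_IZR, minus_IZR; simpl; lra).
    apply lt_IZR in H0. lia.
Qed.

Lemma window_top_le (i n : nat) : (i <= n)%nat -> (n0 <= n)%nat -> IZR (A i) <= alpha * exp (sqrt (INR (S n))).
Proof.
  intros Hin Hn. destruct (Nat.lt_ge_cases i n0).
  - unfold A, window_top. destruct (Nat.ltb_spec i n0); [|lia].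
    destruct (n0_large n0 (le_n _)) as [_ C2]. pose proof (exp_pos (tau * sqrt (INR (S n0)))).
    assert (exp (sqrt (INR (S n0))) <= exp (sqrt (INR (S n)))) by (apply exp_le, sqrt_INR_le; lia).
    nra.
  - destruct (window_spec i H) as (M1&_&_&_). eapply Rle_trans; [apply M1|].
    apply Rmult_le_compat_l; [lra|]. apply exp_le. apply sqrt_INR_le. lia.
Qed.

Section InWindows.

Variable x : R.
Hypothesis x_windows : forall i, (A i - m i + 1 <= cf_digitZ i x <= A i)%Z.

Lemma window_Tmax_bounds (n : nat) : (n0 <= n)%nat ->
  alpha * exp (sqrt (INR (S n))) - exp (tau * sqrt (INR (S n))) < Tmax (S n) x <=
  alpha * exp (sqrt (INR (S n))).
Proof.
  intros Hn. split.
  - eapply Rlt_le_trans; [|apply (digit_le_Tmax x n (S n)); lia].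
    destruct (x_windows n) as [Hxn _]. apply IZR_le in Hxn. rewrite plus_IZR, minus_IZR in Hxn.
    destruct (window_spec n Hn) as (_&L2&L3&_). simpl in Hxn. lra.
  - apply Tmax_le; [pose proof (exp_pos (sqrt (INR (S n)))); nra|].
    intros i Hi. destruct (x_windows i) as [_ Hxi]. apply IZR_le in Hxi.
    eapply Rle_trans; [apply Hxi|]. apply window_top_le; lia.
Qed.

Lemma window_Tmax_cv : tau < 1 ->
  Un_cv (fun n => Tmax (S n) x / exp (Rpower (INR (S n)) (1/2))) alpha.
Proof.
  intros Htau eps Heps.
  destruct (eventually_R_exp_le eps (1 - tau) Heps ltac:(lra)) as [R0 HR0].
  destruct (nat_above (Rabs R0 * Rabs R0)) as [N HN].
  exists (Nat.max N n0). intros n Hn. unfold R_dist. rewrite Rpower_half_sqrt.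
  set (sq := sqrt (INR (S n))).
  assert (Hsmall : exp ((tau - 1) * sq) <= eps).
  { replace ((tau - 1) * sq) with (- (1 - tau) * sq) by ring. apply HR0.
    apply Rle_trans with (Rabs R0); [apply Rle_abs|]. apply sqrt_INR_ge; [apply Rabs_pos|].
    apply Rle_trans with (INR N); auto. apply le_INR. lia. }
  destruct (window_Tmax_bounds n ltac:(lia)) as [Hlow Hup]. fold sq in Hlow, Hup.
  assert (E1 : exp (tau * sq) = exp sq * exp ((tau - 1) * sq)) by (rewrite <- exp_plus; f_equal; ring).
  assert (Hes : 0 < exp sq) by apply exp_pos.
  set (T := Tmax (S n) x) in *.
  assert (Hd1 : T / exp sq <= alpha).
  { apply Rmult_le_reg_r with (exp sq); auto. unfold Rdiv. rewrite Rmult_assoc, Rinv_l by lra. lra. }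
  assert (Hd2 : alpha - exp ((tau - 1) * sq) < T / exp sq).
  { apply Rmult_lt_reg_r with (exp sq); auto. unfold Rdiv. rewrite Rmult_assoc, Rinv_l by lra. nra. }
  rewrite Rabs_left1 by lra. lra.
Qed.

End InWindows.

End DigitWindows.

(** The window at step [n] is large enough to pay for the gap factor of step [n+1]. *)
Lemma window_size_step (alpha s : R) (n0 n : nat) : 0 < alpha -> 0 < s -> (n0 <= n)%nat ->
  exp (2 * s * (ln (alpha + 1) + sqrt (INR (S n)) + 1)) <= exp ((s + 1/2) * sqrt (INR (S n))) - 1 ->
  Rpower (IZR (window_top alpha n0 (S n)) + 1) (2 * s) <= IZR (window_size (s + 1/2) n0 n).
Proof.
  intros Ha Hs Hn Hstep. set (sq := sqrt (INR (S n))) in *.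
  unfold window_top, window_size.
  destruct (Nat.ltb_spec (S n) n0); [lia|]. destruct (Nat.ltb_spec n n0); [lia|].
  destruct (base_Int_part (alpha * exp (sqrt (INR (S (S n)))))) as [L1 _].
  destruct (base_Int_part (exp ((s + 1/2) * sq))) as [_ L4].
  assert (HA0 : 0 <= IZR (Int_part (alpha * exp (sqrt (INR (S (S n))))))).
  { apply IZR_le, Int_part_ge. simpl. left. apply Rmult_lt_0_compat; [lra|apply exp_pos]. }
  apply Rle_trans with (Rpower ((alpha + 1) * exp (sq + 1)) (2 * s)).
  - apply Rle_Rpower_l; [lra|]. split; [lra|].
    assert (exp (sqrt (INR (S (S n)))) <= exp (sq + 1)) by (apply exp_le, sqrt_INR_S_le).
    assert (1 <= exp (sq + 1)).
    { pose proof (sqrt_pos (INR (S n))). apply Rle_trans with (exp 0); [rewrite exp_0; lra|].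
      apply exp_le. unfold sq. lra. }
    nra.
  - unfold Rpower. rewrite ln_mult, ln_exp by (try lra; apply exp_pos).
    replace (2 * s * (ln (alpha + 1) + (sq + 1))) with (2 * s * (ln (alpha + 1) + sq + 1)) by ring.
    fold sq. lra.
Qed.

Lemma not_Hs_null_of_inverse_holder (s C : R) (E : R -> Prop) (f : R -> R) :
  0 < s -> 0 < C ->
  (forall t, 0 <= t <= 1/2 -> E (f t)) ->
  (forall t t', 0 <= t <= 1/2 -> 0 <= t' <= 1/2 -> t <> t' ->
     f t <> f t' /\ Rabs (t - t') <= C * Rpower (Rabs (f t - f t')) s) ->
  ~ Hs_null s E.
Proof.
  intros Hs HC HE Hf HN.
  destruct (HN 1 (/ (16 * C))) as (U&d&Hcov&Hd&Hdiam&Hsum); [lra|apply Rinv_0_lt_compat; lra|].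
  set (e := fun i => Rpower (d i) s * C).
  destruct (diameter_cover_sum_ge (fun i t => 0 <= t <= 1/2 /\ U i (f t)) e 0 (1/2)) as [N HNe].
  - lra.
  - intro i. apply Rmult_lt_0_compat; [apply Rpower_pos|lra].
  - intros i u v [Hu1 Hu2] [Hv1 Hv2].
    destruct (Req_dec u v) as [<-|Hne].
    + rewrite Rminus_diag, Rabs_R0. left. apply Rmult_lt_0_compat; [apply Rpower_pos|lra].
    + destruct (Hf u v Hu1 Hv1 Hne) as [Hinj Hhold].
      eapply Rle_trans; [apply Hhold|]. rewrite Rmult_comm. apply Rmult_le_compat_r; [lra|].
      apply Rle_Rpower_l; [lra|]. split; [|apply Hdiam; auto].
      apply Rabs_pos_lt. apply Rminus_eq_contra. auto.
  - intros t Ht. destruct (Hcov _ (HE t Ht)) as [i Hi]. exists i. split; auto.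
  - unfold e in HNe. rewrite <- scal_sum in HNe. specialize (Hsum N).
    apply Rmult_le_compat_l with (r := C) in Hsum; [|lra].
    replace (C * / (16 * C)) with (1/16) in Hsum by (field; lra). lra.
Qed.

Lemma eventually_nondecreasing_lower_bound (u : nat -> R) (n0 : nat) :
  (forall n, 0 < u n) -> (forall n, (n0 <= n)%nat -> u n <= u (S n)) ->
  exists rho, 0 < rho /\ forall n, rho <= u n.
Proof.
  intros Hp Hm.
  assert (Hmin : forall k, exists r, 0 < r /\ forall i, (i <= k)%nat -> r <= u i).
  { induction k as [|k [r [Hr Hri]]].
    - exists (u O). split; auto. intros i Hi. replace i with O by lia. lra.
    - exists (Rmin r (u (S k))). split; [apply Rmin_pos; auto|].
      intros i Hi. destruct (Nat.eq_dec i (S k)) as [->|]; [apply Rmin_r|].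
      eapply Rle_trans; [apply Rmin_l|]. apply Hri. lia. }
  destruct (Hmin n0) as (r&Hr&Hri). exists r. split; auto. intro n.
  destruct (Nat.le_gt_cases n n0); [auto|].
  replace n with (n0 + (n - n0))%nat by lia. induction (n - n0)%nat as [|d IH].
  - rewrite Nat.add_0_r. auto.
  - eapply Rle_trans; [apply IH|]. rewrite Nat.add_succ_r. apply Hm. lia.
Qed.

(** One more mixed-radix digit gains a factor [m n], one more gap factor costs [(A (S n) + 1)^(2 s)]. *)
Lemma radix_mass_step (A m : nat -> Z) (s : R) (n : nat) :
  (forall i, (0 <= A i)%Z) -> (forall i, (2 <= m i)%Z) ->
  Rpower (IZR (A (S n)) + 1) (2 * s) <= IZR (m n) ->
  radix_prod m n * Rpower (/ (2 * sq_prod A (S n))) s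
  <= radix_prod m (S n) * Rpower (/ (2 * sq_prod A (S (S n)))) s.
Proof.
  intros HA0 Hm Hstep. simpl radix_prod. rewrite (sq_prod_S A (S n)).
  set (Y := IZR (A (S n)) + 1) in *. set (P := sq_prod A (S n)).
  assert (HP : 1 <= P) by (apply sq_prod_ge1; auto).
  assert (HY : 1 <= Y) by (unfold Y; assert (0 <= IZR (A (S n))) by (apply IZR_le; auto); lra).
  replace (/ (2 * (P * Y ^ 2))) with (/ (2 * P) * / (Y ^ 2)) by (field; split; nra).
  rewrite <- Rpower_mult_distr by (apply Rinv_0_lt_compat; nra).
  assert (E : Rpower (/ Y ^ 2) s = / Rpower Y (2 * s)).
  { unfold Rpower. rewrite <- exp_Ropp. f_equal. rewrite ln_Rinv by nra. rewrite ln_pow by lra. simpl. ring. }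
  rewrite E. pose proof (Rpower_pos Y (2 * s)). pose proof (radix_prod_pos m Hm n).
  pose proof (Rpower_pos (/ (2 * P)) s).
  assert (1 <= IZR (m n) * / Rpower Y (2 * s)).
  { apply Rmult_le_reg_r with (Rpower Y (2 * s)); auto. rewrite Rmult_assoc, Rinv_l by lra. lra. }
  assert (0 < radix_prod m n * Rpower (/ (2 * P)) s) by (apply Rmult_lt_0_compat; auto).
  replace (radix_prod m n * IZR (m n) * (Rpower (/ (2 * P)) s * / Rpower Y (2 * s))) with
    ((radix_prod m n * Rpower (/ (2 * P)) s) * (IZR (m n) * / Rpower Y (2 * s))) by ring.
  nra.
Qed.

Lemma lower_bound (alpha s : R) : 0 < alpha -> 0 < s < 1/2 -> ~ Hs_null s (F_set (1/2) alpha).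
Proof.
  intros Ha Hs. set (tau := s + 1/2).
  destruct (window_facts_eventually alpha s Ha Hs) as [Rs HRs].
  destruct (nat_above (Rabs Rs * Rabs Rs)) as [n0 Hn0].
  assert (Hlarge : forall i, (n0 <= i)%nat -> Rs <= sqrt (INR (S i))).
  { intros i Hi. apply Rle_trans with (Rabs Rs); [apply Rle_abs|]. apply sqrt_INR_ge; [apply Rabs_pos|].
    apply Rle_trans with (INR n0); auto. apply le_INR. lia. }
  set (A := window_top alpha n0). set (m := window_size tau n0).
  assert (Hwin : forall i, (n0 <= i)%nat ->
    2 <= exp (tau * sqrt (INR (S i))) /\ 3 <= alpha * exp (sqrt (INR (S i))) - exp (tau * sqrt (INR (S i)))).
  { intros i Hi. destruct (HRs _ (Hlarge i Hi)) as (H1&H2&_). auto. }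
  pose proof (window_size_ge2 alpha tau n0 Hwin) as Hm. pose proof (window_bottom_ge2 alpha tau n0 Hwin) as HA.
  fold A m in Hm, HA.
  assert (HA0 : forall i, (0 <= A i)%Z) by (intro i; specialize (HA i); specialize (Hm i); lia).
  destruct (eventually_nondecreasing_lower_bound
              (fun n => radix_prod m n * Rpower (/ (2 * sq_prod A (S n))) s) n0) as (rho&Hrho&Hrho_le).
  { intro n. apply Rmult_lt_0_compat; [apply radix_prod_pos; auto|apply Rpower_pos]. }
  { intros n Hn. apply radix_mass_step; auto. apply window_size_step; try lra; auto.
    destruct (HRs _ (Hlarge n Hn)) as (_&_&H3). auto. }
  apply (not_Hs_null_of_inverse_holder s (/ rho) _ (coded_point m A)); [lra|apply Rinv_0_lt_compat; auto| |].
  - intros t Ht. destruct (cf_value_irrational _ (coded_digits_ge2 m Hm A HA t ltac:(lra))) as [H1 H2].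
    split; [auto|split; auto].
    apply (window_Tmax_cv alpha tau n0 Ha Hwin); [|unfold tau; lra].
    intro i. unfold coded_point. rewrite cf_digitZ_cf_value by (apply coded_digits_ge2; auto; lra).
    pose proof (radix_digit_range m Hm t i ltac:(lra)). fold A m. lia.
  - intros t t' Ht Ht' Hne. split.
    + apply coded_point_injective; auto; lra.
    + apply coded_point_holder with (rho := rho); auto; lra.
Qed.

Theorem theorem1 : forall alpha : R, 0 < alpha -> dimH_is (F_set (1/2) alpha) (1/2).
Proof.
  intros alpha Ha. split.
  - intros s [Hs HN]. destruct (Rlt_or_le s (1/2)) as [Hlt|Hge]; auto.
    exfalso. apply (lower_bound alpha s Ha (conj Hs Hlt) HN).
  - intros b Hb. destruct (Rle_or_lt b (1/2)) as [Hle|Hgt]; auto.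
    set (s := (b + 1/2) / 2).
    assert (Hs : 0 < s /\ Hs_null s (F_set (1/2) alpha)).
    { split; [unfold s; lra|]. apply upper_bound; auto. unfold s; lra. }
    specialize (Hb s Hs). unfold s in Hb. lra.
Qed.
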